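(* Let $\Delta$ be the finite-difference Laplacian on $\mathbb{Z}$, $\Delta f(n)=f(n+1)+f(n-1)-2f(n)$. There is $\delta>0$ such that for every $t\ge0$ one can choose complex numbers $(a_j)_{j\in\mathbb{Z}}$ with $|a_j|\le1$ so that, with $\psi_0=\sum_{j}a_j\delta_j$ and $\psi(t,n)=(e^{it\Delta}\psi_0)(n)$, $$|\psi(t,0)|\ge\delta\,t^{1/2}.$$
   Context: $\delta_j$ denotes the Kronecker delta function on $\mathbb{Z}$ supported at $j$; $e^{it\Delta}$ is the (bounded, unitary on $\ell^2$) linear Schrödinger evolution on $\mathbb{Z}$, applied to bounded sequences via its kernel. *)

From Stdlib Require Import Reals ZArith.
From Coquelicot Require Import Coquelicot.
Open Scope R_scope.

(* Kernel of e^{it Delta} on Z, Delta f(n) = f(n+1)+f(n-1)-2f(n), whose Fourier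
   symbol is 2cos(theta)-2:
     K t m = (e^{it Delta} delta_0)(m)
           = (1/(2 pi)) \int_{-pi}^{pi} e^{i t (2 cos th - 2)} e^{i m th} dth. *)
Definition schr_kernel (t : R) (m : Z) : C :=
  (/ (2 * PI) * RInt (fun th => cos (t * (2 * cos th - 2) + IZR m * th)) (- PI) PI,
   / (2 * PI) * RInt (fun th => sin (t * (2 * cos th - 2) + IZR m * th)) (- PI) PI).

(* schr_value a t n v : v = (e^{it Delta} psi0)(n) where psi0 = sum_j a_j delta_j,
   i.e. v = sum_{j in Z} a_j K t (n - j), the two-sided series being split into
   j >= 0 and j < 0 (it converges absolutely for bounded a). *)
Definition schr_value (a : Z -> C) (t : R) (n : Z) (v : C) : Prop :=
  exists l1 l2 : C,
    is_series (fun k : nat => Cmult (a (Z.of_nat k)) (schr_kernel t (n - Z.of_nat k)%Z)) l1 /\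
    is_series (fun k : nat => Cmult (a (- (Z.of_nat k + 1))%Z)
                                    (schr_kernel t (n + (Z.of_nat k + 1))%Z)) l2 /\
    v = Cplus l1 l2.

From Stdlib Require Import Reals ZArith Lra Lia Psatz FunctionalExtensionality.
From Coquelicot Require Import Coquelicot.
Open Scope R_scope.

(* The kernel [schr_kernel t m] is the [m]-th Fourier coefficient of the symbol
   [exp (i t (2 cos x - 2))].  Choosing [a_j] of modulus one with [a_j K_t(-j) = |K_t(-j)|]
   for [|j| <= 19 t / 10], and [a_j = 0] otherwise, gives [psi(t,0) = sum_{|m| <= 19t/10} |K_t(m)|].
   Bessel's inequality for the x-derivative of the symbol gives [sum m^2 |K_t(m)|^2 <= 2 t^2],
   so a fixed fraction of the l^2 mass [sum |K_t(m)|^2 = 1] lies in the cone, where van der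
   Corput's first and second derivative tests give [|K_t(m)| <= C / sqrt t].  Hence
   [sum |K_t(m)| >= (sum |K_t(m)|^2) / max |K_t(m)| >= c sqrt t].  The lower bound on the mass
   is obtained without Parseval, by approximating the symbol with the Taylor polynomial of
   [exp (i y)] at [y = 2 t cos x], a trigonometric polynomial. *)

Ltac Ceq := apply injective_projections; simpl; try ring.

Ltac Rring := match goal with |- @eq _ ?a ?b => change (@eq R a b) end; unfold Rminus; ring.

(** * Continuous complex-valued functions and integrals over [-PI, PI] *)

Definition Ccontinuous (h : R -> C) : Prop :=
  forall x, continuous (fun y => fst (h y)) x /\ continuous (fun y => snd (h y)) x.

(* Instances of Coquelicot's [continuous_plus] etc. at [R], so that [apply] matches them
   syntactically instead of unfolding [plus] and [mult]. *)
Lemma continuous_Rplus (f g : R -> R) x :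
  continuous f x -> continuous g x -> continuous (fun y => f y + g y) x.
Proof. apply (continuous_plus f g). Qed.

Lemma continuous_Rminus (f g : R -> R) x :
  continuous f x -> continuous g x -> continuous (fun y => f y - g y) x.
Proof. apply (continuous_minus f g). Qed.

Lemma continuous_Ropp (f : R -> R) x : continuous f x -> continuous (fun y => - f y) x.
Proof. apply (continuous_opp f). Qed.

Lemma continuous_Rmult (f g : R -> R) x :
  continuous f x -> continuous g x -> continuous (fun y => f y * g y) x.
Proof. apply (continuous_mult f g). Qed.

Lemma continuous_Rpow (f : R -> R) n x : continuous f x -> continuous (fun y => f y ^ n) x.
Proof.
  intros Hf; induction n; simpl; [apply continuous_const | now apply continuous_Rmult].
Qed.

Ltac Rcont := repeat lazymatch goal with
  | |- continuous (fun y => @?f y + @?g y) _ => apply continuous_Rplus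
  | |- continuous (fun y => @?f y - @?g y) _ => apply continuous_Rminus
  | |- continuous (fun y => - @?f y) _ => apply continuous_Ropp
  | |- continuous (fun y => @?f y * @?g y) _ => apply continuous_Rmult
  | |- continuous (fun y => @?f y ^ _) _ => apply continuous_Rpow
  | |- continuous (fun y => cos (@?f y)) _ => apply continuous_cos_comp
  | |- continuous (fun y => sin (@?f y)) _ => apply continuous_sin_comp
  | |- continuous (fun y => y) _ => apply continuous_id
  | |- continuous cos _ => apply continuous_cos
  | |- continuous sin _ => apply continuous_sin
  | |- continuous (Rmult ?a) ?x => change (continuous (fun y => a * y) x)
  | |- continuous (fun _ => ?c) _ => apply continuous_const
  | |- continuous (fun y => fst (@?h y)) ?x =>
      solve [match goal with H : Ccontinuous _ |- _ => exact (proj1 (H x)) end]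
  | |- continuous (fun y => snd (@?h y)) ?x =>
      solve [match goal with H : Ccontinuous _ |- _ => exact (proj2 (H x)) end]
  | |- continuous _ _ => auto
  end.

Definition expi (x : R) : C := (cos x, sin x).

Lemma expi_plus a b : expi (a + b) = (expi a * expi b)%C.
Proof. unfold expi; Ceq; [apply cos_plus | rewrite sin_plus; ring]. Qed.

Lemma Cconj_expi a : Cconj (expi a) = expi (- a).
Proof. unfold expi; Ceq; [rewrite cos_neg | rewrite sin_neg]; ring. Qed.

Lemma Cmod_expi a : Cmod (expi a) = 1.
Proof.
  unfold Cmod, expi; cbn [fst snd]. rewrite <- sqrt_1. f_equal.
  rewrite <- (sin2_cos2 a). unfold Rsqr. ring.
Qed.

Definition Cnorm2 (z : C) : R := fst z ^ 2 + snd z ^ 2.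

Lemma Cnorm2_ge_0 z : 0 <= Cnorm2 z.
Proof. unfold Cnorm2; nra. Qed.

Lemma Cnorm2_Cmod z : Cnorm2 z = Cmod z ^ 2.
Proof. rewrite Cmod2_alt. reflexivity. Qed.

Lemma Cmod_le_Rabs_fst_snd (z : C) : Cmod z <= Rabs (fst z) + Rabs (snd z).
Proof.
  destruct z as [a b]. unfold Cmod; cbn [fst snd].
  pose proof (Rabs_pos a); pose proof (Rabs_pos b).
  rewrite <- (sqrt_pow2 (Rabs a + Rabs b)) by lra.
  apply sqrt_le_1_alt. rewrite <- (pow2_abs a), <- (pow2_abs b). nra.
Qed.

Lemma Ccontinuous_plus h g :
  Ccontinuous h -> Ccontinuous g -> Ccontinuous (fun x => h x + g x)%C.
Proof. intros Hh Hg x; destruct (Hh x), (Hg x); simpl; split; Rcont. Qed.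

Lemma Ccontinuous_minus h g :
  Ccontinuous h -> Ccontinuous g -> Ccontinuous (fun x => h x - g x)%C.
Proof. intros Hh Hg x; destruct (Hh x), (Hg x); simpl; split; Rcont. Qed.

Lemma Ccontinuous_mult h g :
  Ccontinuous h -> Ccontinuous g -> Ccontinuous (fun x => h x * g x)%C.
Proof. intros Hh Hg x; destruct (Hh x), (Hg x); simpl; split; Rcont. Qed.

Lemma Ccontinuous_const (c : C) : Ccontinuous (fun _ => c).
Proof. intros x; split; Rcont. Qed.

Lemma Ccontinuous_conj h : Ccontinuous h -> Ccontinuous (fun x => Cconj (h x)).
Proof. intros Hh x; destruct (Hh x); simpl; split; Rcont. Qed.

Lemma Ccontinuous_RtoC (f : R -> R) : (forall x, continuous f x) -> Ccontinuous (fun x => RtoC (f x)).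
Proof. intros Hf x; simpl; split; Rcont. Qed.

Lemma Ccontinuous_expi (f : R -> R) : (forall x, continuous f x) -> Ccontinuous (fun x => expi (f x)).
Proof. intros Hf x; simpl; split; Rcont. Qed.

Lemma Ccontinuous_expi_linear a : Ccontinuous (fun x => expi (a * x)).
Proof. apply (Ccontinuous_expi (fun x => a * x)); intros x; Rcont. Qed.

Lemma continuous_Cnorm2 h x : Ccontinuous h -> continuous (fun y => Cnorm2 (h y)) x.
Proof.
  intros Hh; destruct (Hh x). unfold Cnorm2; Rcont.
Qed.

Definition Ipi (f : R -> R) : R := RInt f (- PI) PI.

Lemma ex_RInt_continuous_R (f : R -> R) a b : (forall x, continuous f x) -> ex_RInt f a b.
Proof. intros Hf; apply (ex_RInt_continuous (V:=R_CompleteNormedModule)); auto. Qed.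

Lemma Ipi_plus (f g : R -> R) : (forall x, continuous f x) -> (forall x, continuous g x) ->
  Ipi (fun x => f x + g x) = Ipi f + Ipi g.
Proof. intros Hf Hg. apply (RInt_plus f g); now apply ex_RInt_continuous_R. Qed.

Lemma Ipi_scal a (f : R -> R) : (forall x, continuous f x) -> Ipi (fun x => a * f x) = a * Ipi f.
Proof. intros Hf. apply (RInt_scal f); now apply ex_RInt_continuous_R. Qed.

Lemma Ipi_const c : Ipi (fun _ => c) = 2 * PI * c.
Proof. unfold Ipi. rewrite RInt_const. simpl. unfold scal; simpl; unfold mult; simpl. ring. Qed.

Lemma Ipi_le (f g : R -> R) : (forall x, continuous f x) -> (forall x, continuous g x) ->
  (forall x, f x <= g x) -> Ipi f <= Ipi g.
Proof.
  intros. apply RInt_le; try apply ex_RInt_continuous_R; auto. pose proof PI_RGT_0; lra.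
Qed.

Lemma Ipi_derive (F f : R -> R) : (forall x, is_derive F x (f x)) -> (forall x, continuous f x) ->
  Ipi f = F PI - F (- PI).
Proof.
  intros HF Hf. apply is_RInt_unique.
  apply (is_RInt_derive (V:=R_CompleteNormedModule)); intros; auto.
Qed.

Lemma sin_IZR_PI k : sin (IZR k * PI) = 0.
Proof. apply sin_eq_0_1; now exists k. Qed.

Lemma cos_plus_IZR_PI x k : cos (x + IZR k * PI) = cos (x - IZR k * PI).
Proof. rewrite cos_plus, cos_minus, sin_IZR_PI; ring. Qed.

Lemma sin_plus_IZR_PI x k : sin (x + IZR k * PI) = sin (x - IZR k * PI).
Proof. rewrite sin_plus, sin_minus, sin_IZR_PI; ring. Qed.

Definition CIpi (h : R -> C) : C := (Ipi (fun x => fst (h x)), Ipi (fun x => snd (h x))).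

Lemma CIpi_plus h g : Ccontinuous h -> Ccontinuous g ->
  CIpi (fun x => h x + g x)%C = (CIpi h + CIpi g)%C.
Proof. intros Hh Hg. unfold CIpi; Ceq; apply Ipi_plus; intros; Rcont. Qed.

Lemma CIpi_scal c h : Ccontinuous h -> CIpi (fun x => c * h x)%C = (c * CIpi h)%C.
Proof.
  intros Hh. destruct c as [c1 c2].
  assert (Hf : forall x, continuous (fun y => fst (h y)) x) by apply Hh.
  assert (Hs : forall x, continuous (fun y => snd (h y)) x) by apply Hh.
  unfold CIpi; Ceq.
  - transitivity (Ipi (fun x => c1 * fst (h x) + - c2 * snd (h x))).
    { f_equal; apply functional_extensionality; intros; ring. }
    rewrite Ipi_plus, !Ipi_scal by (intros; Rcont). ring.
  - rewrite Ipi_plus, !Ipi_scal by (intros; Rcont). ring.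
Qed.

Lemma CIpi_expi k : CIpi (fun x => expi (IZR k * x)) = if Z.eq_dec k 0 then RtoC (2 * PI) else 0%C.
Proof.
  unfold CIpi, expi; simpl. destruct (Z.eq_dec k 0) as [->|Hk].
  - Ceq; [transitivity (Ipi (fun _ => 1)) | transitivity (Ipi (fun _ => 0))];
      try (rewrite Ipi_const; ring); f_equal; apply functional_extensionality; intros x;
      rewrite Rmult_0_l; [apply cos_0 | apply sin_0].
  - assert (Hk' : IZR k <> 0) by now apply not_0_IZR.
    rewrite (Ipi_derive (fun x => sin (IZR k * x) / IZR k)),
      (Ipi_derive (fun x => - cos (IZR k * x) / IZR k)).
    + replace (IZR k * - PI) with (- (IZR k * PI)) by ring.
      rewrite sin_neg, cos_neg, sin_IZR_PI. Ceq; field; auto.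
    + intros y. auto_derive; auto. field; auto.
    + intros y; Rcont.
    + intros y. auto_derive; auto. field; auto.
    + intros y; Rcont.
Qed.

Fixpoint zsumC (M : nat) (F : Z -> C) : C :=
  match M with
  | O => F 0%Z
  | S M' => (zsumC M' F + F (Z.of_nat M) + F (- Z.of_nat M)%Z)%C
  end.

Fixpoint zsumR (M : nat) (F : Z -> R) : R :=
  match M with
  | O => F 0%Z
  | S M' => zsumR M' F + F (Z.of_nat M) + F (- Z.of_nat M)%Z
  end.

Lemma zsumC_plus M F G : zsumC M (fun m => F m + G m)%C = (zsumC M F + zsumC M G)%C.
Proof. induction M; simpl; auto. rewrite IHM; ring. Qed.

Lemma zsumC_scal M c F : zsumC M (fun m => c * F m)%C = (c * zsumC M F)%C.
Proof. induction M; simpl; auto. rewrite IHM; ring. Qed.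

Lemma zsumR_plus M F G : zsumR M (fun m => F m + G m) = zsumR M F + zsumR M G.
Proof. induction M; simpl; auto. rewrite IHM; ring. Qed.

Lemma zsumR_scal M c F : zsumR M (fun m => c * F m) = c * zsumR M F.
Proof. induction M; simpl; auto. rewrite IHM; ring. Qed.

Lemma zsumR_0 M : zsumR M (fun _ => 0) = 0.
Proof. induction M; simpl; auto. rewrite IHM; ring. Qed.

Lemma zsumR_le M F G : (forall m, F m <= G m) -> zsumR M F <= zsumR M G.
Proof.
  intros H; induction M; cbn [zsumR]; auto.
  pose proof (H (Z.of_nat (S M))); pose proof (H (- Z.of_nat (S M))%Z). lra.
Qed.

Lemma zsumR_ge_0 M F : (forall m, 0 <= F m) -> 0 <= zsumR M F.
Proof.
  intros H. rewrite <- (zsumR_0 M). now apply zsumR_le.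
Qed.

Lemma zsumR_ext_in M F G : (forall m, (Z.abs m <= Z.of_nat M)%Z -> F m = G m) ->
  zsumR M F = zsumR M G.
Proof.
  intros H; induction M; cbn [zsumR]; [apply H; simpl; lia|].
  rewrite IHM by (intros; apply H; lia).
  now rewrite (H (Z.of_nat (S M))), (H (- Z.of_nat (S M))%Z) by lia.
Qed.

Lemma zsumR_term_le M F m : (forall k, 0 <= F k) -> (Z.abs m <= Z.of_nat M)%Z -> F m <= zsumR M F.
Proof.
  intros H. induction M; intros Hm; cbn [zsumR].
  - replace m with 0%Z by lia. lra.
  - pose proof (H (Z.of_nat (S M))); pose proof (H (- Z.of_nat (S M))%Z).
    destruct (Z.eq_dec (Z.abs m) (Z.of_nat (S M))).
    + pose proof (zsumR_ge_0 M F H).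
      destruct (Z.abs_spec m) as [[_ Hx]|[_ Hx]];
        [replace m with (Z.of_nat (S M)) by lia | replace m with (- Z.of_nat (S M))%Z by lia]; lra.
    + pose proof (IHM ltac:(lia)). lra.
Qed.

Lemma fst_zsumC M F : fst (zsumC M F) = zsumR M (fun m => fst (F m)).
Proof. induction M; simpl; auto. rewrite IHM; ring. Qed.

Lemma Cconj_zsumC M F : Cconj (zsumC M F) = zsumC M (fun m => Cconj (F m)).
Proof. induction M; simpl; auto. rewrite <- IHM. Ceq. Qed.

Lemma zsumC_Kronecker M n a :
  zsumC M (fun m => if Z.eq_dec m n then a else 0%C) = if Z_le_dec (Z.abs n) (Z.of_nat M) then a else 0%C.
Proof.
  induction M as [|M IHM]; cbn [zsumC].
  - destruct (Z.eq_dec 0 n), (Z_le_dec (Z.abs n) (Z.of_nat 0)); auto; lia.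
  - rewrite IHM.
    destruct (Z.eq_dec (Z.of_nat (S M)) n), (Z.eq_dec (- Z.of_nat (S M)) n),
      (Z_le_dec (Z.abs n) (Z.of_nat M)), (Z_le_dec (Z.abs n) (Z.of_nat (S M))); try lia; Ceq.
Qed.

Lemma Ccontinuous_zsumC M (F : Z -> R -> C) : (forall m, Ccontinuous (F m)) ->
  Ccontinuous (fun x => zsumC M (fun m => F m x)).
Proof.
  intros H; induction M; cbn [zsumC]; auto.
  apply Ccontinuous_plus; [apply Ccontinuous_plus|]; auto.
Qed.

Lemma CIpi_zsumC M (F : Z -> R -> C) : (forall m, Ccontinuous (F m)) ->
  CIpi (fun x => zsumC M (fun m => F m x)) = zsumC M (fun m => CIpi (F m)).
Proof.
  intros H; induction M; cbn [zsumC]; auto.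
  rewrite !CIpi_plus, IHM; auto using Ccontinuous_zsumC, Ccontinuous_plus.
Qed.

(** * Fourier coefficients and trigonometric polynomials *)

(* The sign convention of [schr_kernel]: a trigonometric polynomial [h] is
   [sum_m fourier_coef m h * expi (- m x)]. *)
Definition fourier_coef (m : Z) (h : R -> C) : C :=
  (RtoC (/ (2 * PI)) * CIpi (fun x => h x * expi (IZR m * x)))%C.

Lemma CIpi_fourier_coef m h :
  CIpi (fun x => h x * expi (IZR m * x))%C = (RtoC (2 * PI) * fourier_coef m h)%C.
Proof.
  unfold fourier_coef. rewrite Cmult_assoc, <- RtoC_mult, Rinv_r; [ring|].
  pose proof PI_RGT_0; lra.
Qed.

Lemma fourier_coef_plus m h g : Ccontinuous h -> Ccontinuous g ->
  fourier_coef m (fun x => h x + g x)%C = (fourier_coef m h + fourier_coef m g)%C.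
Proof.
  intros Hh Hg. unfold fourier_coef.
  replace (fun x => (h x + g x) * expi (IZR m * x))%C
    with (fun x => h x * expi (IZR m * x) + g x * expi (IZR m * x))%C
    by (apply functional_extensionality; intros; ring).
  rewrite CIpi_plus by auto using Ccontinuous_mult, Ccontinuous_expi_linear. ring.
Qed.

Lemma fourier_coef_scal m c h : Ccontinuous h ->
  fourier_coef m (fun x => c * h x)%C = (c * fourier_coef m h)%C.
Proof.
  intros Hh. unfold fourier_coef.
  replace (fun x => (c * h x) * expi (IZR m * x))%C with (fun x => c * (h x * expi (IZR m * x)))%C
    by (apply functional_extensionality; intros; ring).
  rewrite CIpi_scal by auto using Ccontinuous_mult, Ccontinuous_expi_linear. ring.
Qed.

Lemma fourier_coef_zsumC m M (F : Z -> R -> C) : (forall n, Ccontinuous (F n)) ->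
  fourier_coef m (fun x => zsumC M (fun n => F n x)) = zsumC M (fun n => fourier_coef m (F n)).
Proof.
  intros H. induction M; cbn [zsumC]; auto.
  rewrite !fourier_coef_plus, IHM; auto using Ccontinuous_zsumC, Ccontinuous_plus.
Qed.

Lemma fourier_coef_expi m n :
  fourier_coef m (fun x => expi (- IZR n * x)) = if Z.eq_dec m n then 1%C else 0%C.
Proof.
  unfold fourier_coef.
  replace (fun x => expi (- IZR n * x) * expi (IZR m * x))%C with (fun x => expi (IZR (m - n) * x))
    by (apply functional_extensionality; intros; rewrite <- expi_plus, minus_IZR; f_equal; ring).
  rewrite CIpi_expi.
  destruct (Z.eq_dec (m - n) 0), (Z.eq_dec m n); try lia; [|Ceq].
  rewrite <- RtoC_mult, Rinv_l; auto. pose proof PI_RGT_0; lra.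
Qed.

Inductive trig_poly (M : nat) : (R -> C) -> Prop :=
  | trig_poly_expi m : (Z.abs m <= Z.of_nat M)%Z -> trig_poly M (fun x => expi (- IZR m * x))
  | trig_poly_plus F G : trig_poly M F -> trig_poly M G -> trig_poly M (fun x => F x + G x)%C
  | trig_poly_scal c F : trig_poly M F -> trig_poly M (fun x => c * F x)%C
  | trig_poly_ext F G : trig_poly M F -> (forall x, F x = G x) -> trig_poly M G.

Lemma trig_poly_continuous M F : trig_poly M F -> Ccontinuous F.
Proof.
  induction 1.
  - apply Ccontinuous_expi_linear.
  - now apply Ccontinuous_plus.
  - apply Ccontinuous_mult; auto using Ccontinuous_const.
  - replace G with F; auto. now apply functional_extensionality.
Qed.

Lemma trig_poly_fourier_series M F : trig_poly M F ->
  forall x, F x = zsumC M (fun m => fourier_coef m F * expi (- IZR m * x))%C.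
Proof.
  induction 1 as [n Hn | F G HF IHF HG IHG | c F HF IHF | F G HF IHF Heq]; intros x.
  - transitivity (zsumC M (fun m => if Z.eq_dec m n then expi (- IZR n * x) else 0%C)).
    { rewrite zsumC_Kronecker. now destruct Z_le_dec. }
    f_equal; apply functional_extensionality; intros m.
    rewrite fourier_coef_expi. destruct (Z.eq_dec m n); subst; ring.
  - rewrite IHF, IHG, <- zsumC_plus. f_equal; apply functional_extensionality; intros m.
    rewrite fourier_coef_plus by eauto using trig_poly_continuous. ring.
  - rewrite IHF, <- zsumC_scal. f_equal; apply functional_extensionality; intros m.
    rewrite fourier_coef_scal by eauto using trig_poly_continuous. ring.
  - replace G with F by now apply functional_extensionality. auto.
Qed.

Lemma trig_poly_le M N F : (M <= N)%nat -> trig_poly M F -> trig_poly N F.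
Proof.
  intros HMN. induction 1.
  - apply trig_poly_expi. lia.
  - now apply trig_poly_plus.
  - now apply trig_poly_scal.
  - eapply trig_poly_ext; eauto.
Qed.

Lemma trig_poly_partial_fourier_sum M h :
  trig_poly M (fun x => zsumC M (fun m => fourier_coef m h * expi (- IZR m * x))%C).
Proof.
  assert (H : forall M', (M' <= M)%nat ->
    trig_poly M (fun x => zsumC M' (fun m => fourier_coef m h * expi (- IZR m * x))%C)).
  { induction M'; intros HM; cbn [zsumC].
    - apply trig_poly_scal, trig_poly_expi. simpl; lia.
    - repeat apply trig_poly_plus; [apply IHM'; lia | ..];
        apply trig_poly_scal, trig_poly_expi; lia. }
  now apply H.
Qed.

Definition L2sq (h : R -> C) : R := Ipi (fun x => Cnorm2 (h x)).

Lemma L2sq_ge_0 h : Ccontinuous h -> 0 <= L2sq h.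
Proof.
  intros Hh. unfold L2sq. rewrite <- (Rmult_0_r (2 * PI)), <- Ipi_const.
  apply Ipi_le; intros; [Rcont | apply continuous_Cnorm2; auto | apply Cnorm2_ge_0].
Qed.

Lemma Ipi_inner_trig_poly M h P : Ccontinuous h -> trig_poly M P ->
  Ipi (fun x => fst (h x * Cconj (P x))%C)
  = 2 * PI * zsumR M (fun m => fst (Cconj (fourier_coef m P) * fourier_coef m h)%C).
Proof.
  intros Hh HP.
  change (Ipi (fun x => fst (h x * Cconj (P x))%C)) with (fst (CIpi (fun x => h x * Cconj (P x))%C)).
  replace (fun x => h x * Cconj (P x))%C with
    (fun x => zsumC M (fun m => Cconj (fourier_coef m P) * (h x * expi (IZR m * x)%R))%C).
  2:{ apply functional_extensionality; intros x.
      rewrite (trig_poly_fourier_series M P HP x), Cconj_zsumC, <- zsumC_scal.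
      f_equal; apply functional_extensionality; intros m.
      rewrite Cmult_conj, Cconj_expi. replace (- (- IZR m * x)) with (IZR m * x) by ring. ring. }
  rewrite CIpi_zsumC by auto using Ccontinuous_mult, Ccontinuous_const, Ccontinuous_expi_linear.
  rewrite fst_zsumC, <- zsumR_scal. f_equal; apply functional_extensionality; intros m.
  rewrite CIpi_scal, CIpi_fourier_coef by auto using Ccontinuous_mult, Ccontinuous_expi_linear.
  destruct (fourier_coef m P), (fourier_coef m h). simpl. ring.
Qed.

(* Pythagoras for the orthogonal projection onto trigonometric polynomials of degree M. *)
Lemma L2sq_sub_trig_poly M h P : Ccontinuous h -> trig_poly M P ->
  L2sq (fun x => h x - P x)%C = L2sq h - 2 * PI * zsumR M (fun m => Cnorm2 (fourier_coef m h))
    + 2 * PI * zsumR M (fun m => Cnorm2 (fourier_coef m h - fourier_coef m P)%C).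
Proof.
  intros Hh HP. pose proof (trig_poly_continuous _ _ HP) as HPc.
  assert (C1 : Ccontinuous (fun y => h y * Cconj (P y))%C)
    by auto using Ccontinuous_mult, Ccontinuous_conj.
  assert (C2 : Ccontinuous (fun y => P y * Cconj (P y))%C)
    by auto using Ccontinuous_mult, Ccontinuous_conj.
  assert (C3 : forall x, continuous (fun y => Cnorm2 (h y)) x)
    by (intros; now apply continuous_Cnorm2).
  unfold L2sq.
  replace (fun x => Cnorm2 (h x - P x)%C) with
    (fun x => (Cnorm2 (h x) + (-2) * fst (h x * Cconj (P x))%C) + 1 * fst (P x * Cconj (P x))%C)
    by (apply functional_extensionality; intros x; unfold Cnorm2;
        destruct (h x), (P x); simpl; ring).
  rewrite !Ipi_plus, !Ipi_scal by (intros; Rcont).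
  rewrite (Ipi_inner_trig_poly M h P), (Ipi_inner_trig_poly M P P) by auto.
  replace (zsumR M (fun m => Cnorm2 (fourier_coef m h - fourier_coef m P)%C)) with
    (zsumR M (fun m => Cnorm2 (fourier_coef m h)
       + (-2) * fst (Cconj (fourier_coef m P) * fourier_coef m h)%C
       + 1 * fst (Cconj (fourier_coef m P) * fourier_coef m P)%C))
    by (f_equal; apply functional_extensionality; intros m; unfold Cnorm2;
        destruct (fourier_coef m h), (fourier_coef m P); simpl; ring).
  rewrite !zsumR_plus, !zsumR_scal. ring.
Qed.

Lemma L2sq_sub_trig_poly_ge M h P : Ccontinuous h -> trig_poly M P ->
  L2sq h - 2 * PI * zsumR M (fun m => Cnorm2 (fourier_coef m h)) <= L2sq (fun x => h x - P x)%C.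
Proof.
  intros Hh HP. rewrite (L2sq_sub_trig_poly M h P) by auto.
  pose proof (zsumR_ge_0 M (fun m => Cnorm2 (fourier_coef m h - fourier_coef m P)%C)
    (fun m => Cnorm2_ge_0 _)).
  pose proof PI_RGT_0. nra.
Qed.

Lemma bessel_inequality M h : Ccontinuous h ->
  2 * PI * zsumR M (fun m => Cnorm2 (fourier_coef m h)) <= L2sq h.
Proof.
  intros Hh.
  set (P := fun x => zsumC M (fun m => fourier_coef m h * expi (- IZR m * x))%C).
  assert (HP : trig_poly M P) by apply trig_poly_partial_fourier_sum.
  assert (Hcoef : forall m, (Z.abs m <= Z.of_nat M)%Z -> fourier_coef m P = fourier_coef m h).
  { intros m Hm. unfold P.
    rewrite fourier_coef_zsumC by auto using Ccontinuous_mult, Ccontinuous_const, Ccontinuous_expi_linear.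
    transitivity (zsumC M (fun n => if Z.eq_dec n m then fourier_coef m h else 0%C)).
    - f_equal; apply functional_extensionality; intros n.
      rewrite fourier_coef_scal, fourier_coef_expi by apply Ccontinuous_expi_linear.
      destruct (Z.eq_dec m n), (Z.eq_dec n m); subst; try congruence; ring.
    - rewrite zsumC_Kronecker. now destruct Z_le_dec. }
  pose proof (L2sq_sub_trig_poly M h P Hh HP) as Hpy.
  rewrite (zsumR_ext_in M (fun m => Cnorm2 (fourier_coef m h - fourier_coef m P)%C) (fun _ => 0)) in Hpy
    by (intros m Hm; cbv beta; rewrite Hcoef by auto; unfold Cnorm2; simpl; ring).
  rewrite zsumR_0 in Hpy.
  pose proof (L2sq_ge_0 (fun x => h x - P x)%C
    (Ccontinuous_minus _ _ Hh (trig_poly_continuous _ _ HP))).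
  lra.
Qed.

(** * Taylor expansion of [expi] *)

Definition is_Cderive (u du : R -> C) (x : R) : Prop :=
  is_derive (fun y => fst (u y)) x (fst (du x)) /\ is_derive (fun y => snd (u y)) x (snd (du x)).

Lemma is_Cderive_plus u du v dv x : is_Cderive u du x -> is_Cderive v dv x ->
  is_Cderive (fun y => u y + v y)%C (fun y => du y + dv y)%C x.
Proof.
  intros [H1 H2] [H3 H4]. split; simpl.
  - apply (is_derive_plus (fun y => fst (u y)) (fun y => fst (v y))); auto.
  - apply (is_derive_plus (fun y => snd (u y)) (fun y => snd (v y))); auto.
Qed.

Lemma is_Cderive_minus u du v dv x : is_Cderive u du x -> is_Cderive v dv x ->
  is_Cderive (fun y => u y - v y)%C (fun y => du y - dv y)%C x.
Proof.
  intros [H1 H2] [H3 H4]. split; simpl.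
  - apply (is_derive_minus (fun y => fst (u y)) (fun y => fst (v y))); auto.
  - apply (is_derive_minus (fun y => snd (u y)) (fun y => snd (v y))); auto.
Qed.

Lemma is_Cderive_ext u du dv x : is_Cderive u du x -> du x = dv x -> is_Cderive u dv x.
Proof. intros [H1 H2] He. split; rewrite <- He; auto. Qed.

Lemma is_Cderive_const (c : C) x : is_Cderive (fun _ => c) (fun _ => 0%C) x.
Proof. split; apply (is_derive_const (K:=R_AbsRing) (V:=R_NormedModule)). Qed.

Lemma is_Cderive_RtoC_scal (p dp : R -> R) (c : C) x : is_derive p x (dp x) ->
  is_Cderive (fun y => RtoC (p y) * c)%C (fun y => RtoC (dp y) * c)%C x.
Proof.
  intros H. destruct c as [c1 c2]. split; simpl.
  - apply (is_derive_ext (fun y => c1 * p y)); [intros; Rring|].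
    replace (dp x * c1 - 0 * c2) with (c1 * dp x) by ring. now apply (is_derive_scal p).
  - apply (is_derive_ext (fun y => c2 * p y)); [intros; Rring|].
    replace (dp x * c2 + 0 * c1) with (c2 * dp x) by ring. now apply (is_derive_scal p).
Qed.

Lemma is_Cderive_expi x : is_Cderive expi (fun y => Ci * expi y)%C x.
Proof.
  split; simpl.
  - replace (0 * cos x - 1 * sin x) with (- sin x) by ring. apply is_derive_cos.
  - replace (0 * sin x + 1 * cos x) with (cos x) by ring. apply is_derive_sin.
Qed.

Lemma is_Cderive_comp_opp u du x : is_Cderive u du (- x) ->
  is_Cderive (fun y => u (- y)) (fun y => - du (- y)%R)%C x.
Proof.
  intros [H1 H2]. split; simpl;
    [replace (- fst (du (- x))) with (-1 * fst (du (- x))) by ring;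
     apply (is_derive_comp (fun y => fst (u y)) Ropp)
    |replace (- snd (du (- x))) with (-1 * snd (du (- x))) by ring;
     apply (is_derive_comp (fun y => snd (u y)) Ropp)]; auto; auto_derive; auto; ring.
Qed.

Lemma is_derive_fst_Cmult (w : C) u du x : is_Cderive u du x ->
  is_derive (fun y => fst (w * u y)%C) x (fst (w * du x)%C).
Proof.
  intros [H1 H2]. destruct w as [w1 w2]; simpl.
  apply (is_derive_minus (fun y => w1 * fst (u y)) (fun y => w2 * snd (u y)));
    [apply (is_derive_scal (fun y => fst (u y))) | apply (is_derive_scal (fun y => snd (u y)))]; auto.
Qed.

Lemma derive_le_nonneg (B dB : R -> R) X : 0 <= X -> (forall s, is_derive B s (dB s)) ->
  (forall s, 0 <= s <= X -> 0 <= dB s) -> B 0 <= B X.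
Proof.
  intros HX HB Hd.
  destruct (MVT_gen B 0 X dB) as [c [Hc Hm]].
  - intros; apply HB.
  - intros; apply continuity_pt_filterlim, (ex_derive_continuous B). eexists; apply HB.
  - rewrite Rmin_left, Rmax_right in Hc by lra. specialize (Hd c Hc). nra.
Qed.

(* Rotating [u X] onto the positive real axis reduces this to the real mean value
   theorem for [B - Re (w u)]. *)
Lemma Cmod_le_of_derive_le (u du : R -> C) (B dB : R -> R) X : 0 <= X ->
  u 0 = 0%C -> B 0 = 0 -> (forall s, is_Cderive u du s) -> (forall s, is_derive B s (dB s)) ->
  (forall s, 0 <= s <= X -> Cmod (du s) <= dB s) -> Cmod (u X) <= B X.
Proof.
  intros HX Hu0 HB0 Hu HB Hb.
  destruct (Req_dec (Cmod (u X)) 0) as [Hz|Hz].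
  { rewrite Hz, <- HB0. apply (derive_le_nonneg B dB); auto.
    intros s Hs. specialize (Hb s Hs). pose proof (Cmod_ge_0 (du s)). lra. }
  set (w := (RtoC (/ Cmod (u X)) * Cconj (u X))%C).
  assert (Hw1 : fst (w * u X)%C = Cmod (u X)).
  { transitivity (/ Cmod (u X) * (Re (u X) ^ 2 + Im (u X) ^ 2)).
    - unfold w, Re, Im. destruct (u X); simpl; ring.
    - rewrite <- Cmod2_alt. field; auto. }
  assert (Hw2 : Cmod w = 1).
  { unfold w. rewrite Cmod_mult, Cmod_conj, Cmod_R, Rabs_right; [field; auto|].
    apply Rle_ge, Rlt_le, Rinv_0_lt_compat. pose proof (Cmod_ge_0 (u X)); lra. }
  assert (Hw0 : fst (w * u 0)%C = 0) by (rewrite Hu0; destruct w; simpl; ring).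
  pose proof (derive_le_nonneg (fun s => B s - fst (w * u s)%C)
    (fun s => dB s - fst (w * du s)%C) X HX) as Hmono.
  cbv beta in Hmono. rewrite Hw0, Hw1, HB0 in Hmono. enough (0 - 0 <= B X - Cmod (u X)) by lra.
  apply Hmono.
  - intros s. apply (is_derive_minus B (fun s => fst (w * u s)%C)); auto using is_derive_fst_Cmult.
  - intros s Hs. pose proof (re_le_Cmod (w * du s)%C) as Hre.
    rewrite Cmod_mult, Hw2 in Hre. specialize (Hb s Hs). apply Rabs_le_between in Hre.
    unfold Re in Hre. lra.
Qed.

Lemma is_derive_pow_fact n y :
  is_derive (fun y => y ^ S n / INR (fact (S n))) y (y ^ n / INR (fact n)).
Proof.
  apply (is_derive_ext (fun y => / INR (fact (S n)) * y ^ S n));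
    [intros; unfold Rdiv; apply Rmult_comm|].
  replace (y ^ n / INR (fact n)) with (/ INR (fact (S n)) * (INR (S n) * 1 * y ^ Nat.pred (S n))).
  - apply is_derive_scal, is_derive_pow, (is_derive_id (K:=R_AbsRing)).
  - rewrite fact_simpl, mult_INR. simpl Nat.pred.
    field. split; apply INR_fact_neq_0 || (apply not_0_INR; lia).
Qed.

Lemma Cmod_le_pow_fact_of_derive (u du : R -> C) K : u 0 = 0%C ->
  (forall s, is_Cderive u du s) -> (forall s, Cmod (du s) <= Rabs s ^ K / INR (fact K)) ->
  forall x, Cmod (u x) <= Rabs x ^ S K / INR (fact (S K)).
Proof.
  intros Hu0 Hu Hdu x.
  assert (HB0 : 0 ^ S K / INR (fact (S K)) = 0) by (simpl; unfold Rdiv; ring).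
  destruct (Rle_dec 0 x).
  - rewrite Rabs_right by lra.
    apply (Cmod_le_of_derive_le u du (fun s => s ^ S K / INR (fact (S K))) (fun s => s ^ K / INR (fact K)));
      auto using is_derive_pow_fact.
    intros s Hs. specialize (Hdu s). now rewrite Rabs_right in Hdu by lra.
  - rewrite Rabs_left by lra. replace x with (- - x) at 1 by ring.
    apply (Cmod_le_of_derive_le (fun y => u (- y)) (fun y => - du (- y)%R)%C
      (fun s => s ^ S K / INR (fact (S K))) (fun s => s ^ K / INR (fact K)));
      auto using is_derive_pow_fact; try lra.
    + now rewrite Ropp_0.
    + intros s; now apply is_Cderive_comp_opp.
    + intros s Hs. rewrite Cmod_opp. specialize (Hdu (- s)).
      now rewrite Rabs_Ropp, Rabs_right in Hdu by lra.
Qed.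

Fixpoint expi_taylor (K : nat) (x : R) : C :=
  match K with
  | O => 1%C
  | S K' => (expi_taylor K' x + RtoC (x ^ K / INR (fact K)) * Ci ^ K)%C
  end.

Lemma expi_taylor_0 K : expi_taylor K 0 = 1%C.
Proof.
  induction K; simpl; auto. rewrite IHK. unfold Rdiv. rewrite Rmult_0_l, Rmult_0_l. ring.
Qed.

Lemma is_Cderive_expi_taylor K x : is_Cderive (expi_taylor (S K)) (fun y => Ci * expi_taylor K y)%C x.
Proof.
  induction K.
  - eapply is_Cderive_ext.
    + apply is_Cderive_plus; [apply is_Cderive_const|].
      apply (is_Cderive_RtoC_scal _ (fun y => y ^ 0 / INR (fact 0))), (is_derive_pow_fact 0).
    + Ceq; field.
  - eapply is_Cderive_ext.
    + apply is_Cderive_plus; [apply IHK|].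
      apply (is_Cderive_RtoC_scal _ (fun y => y ^ S K / INR (fact (S K)))), is_derive_pow_fact.
    + change (expi_taylor (S K) x)
        with (expi_taylor K x + RtoC (x ^ S K / INR (fact (S K))) * Ci ^ S K)%C.
      change (Ci ^ S (S K))%C with (Ci * Ci ^ S K)%C. generalize (Ci ^ S K)%C; intros c. ring.
Qed.

Lemma Cmod_expi_sub_taylor K x :
  Cmod (expi x - expi_taylor K x) <= Rabs x ^ S K / INR (fact (S K)).
Proof.
  assert (H0 : forall K, (expi 0 - expi_taylor K 0)%C = 0%C).
  { intros. rewrite expi_taylor_0. unfold expi. rewrite cos_0, sin_0. Ceq. }
  revert x. induction K as [|K IHK]; intros x.
  - apply (Cmod_le_pow_fact_of_derive (fun y => expi y - expi_taylor 0 y)%C (fun y => Ci * expi y)%C); auto.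
    + intros s. eapply is_Cderive_ext.
      * apply is_Cderive_minus; [apply is_Cderive_expi | apply is_Cderive_const].
      * cbv beta; ring.
    + intros s. rewrite Cmod_mult, Cmod_Ci, Cmod_expi. simpl; lra.
  - apply (Cmod_le_pow_fact_of_derive (fun y => expi y - expi_taylor (S K) y)%C
      (fun y => Ci * (expi y - expi_taylor K y))%C); auto.
    + intros s. eapply is_Cderive_ext.
      * apply is_Cderive_minus; [apply is_Cderive_expi | apply is_Cderive_expi_taylor].
      * cbv beta; ring.
    + intros s. rewrite Cmod_mult, Cmod_Ci, Rmult_1_l. apply IHK.
Qed.

Lemma trig_poly_const M c : trig_poly M (fun _ => c).
Proof.
  eapply trig_poly_ext; [apply (trig_poly_scal _ c), (trig_poly_expi _ 0); simpl; lia|].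
  intros x. unfold expi. replace (- IZR 0 * x) with 0 by (simpl; ring). rewrite cos_0, sin_0. Ceq.
Qed.

Lemma trig_poly_cos_mult M F : trig_poly M F -> trig_poly (S M) (fun x => RtoC (cos x) * F x)%C.
Proof.
  induction 1 as [m Hm | F G HF IHF HG IHG | c F HF IHF | F G HF IHF Heq].
  - eapply trig_poly_ext.
    + apply trig_poly_plus; apply (trig_poly_scal _ (RtoC (/ 2))).
      * apply (trig_poly_expi _ (m + 1)); lia.
      * apply (trig_poly_expi _ (m - 1)); lia.
    + intros x. rewrite plus_IZR, minus_IZR. unfold expi.
      replace (- (IZR m + 1) * x) with (- IZR m * x - x) by ring.
      replace (- (IZR m - 1) * x) with (- IZR m * x + x) by ring.
      rewrite cos_minus, cos_plus, sin_minus, sin_plus. Ceq; field.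
  - eapply trig_poly_ext; [apply (trig_poly_plus _ _ _ IHF IHG)|]. intros; cbv beta; ring.
  - eapply trig_poly_ext; [apply (trig_poly_scal _ c _ IHF)|]. intros; cbv beta; ring.
  - eapply trig_poly_ext; [apply IHF|]. intros; cbv beta; now rewrite Heq.
Qed.

Lemma trig_poly_cos_pow k : trig_poly k (fun x => RtoC (cos x ^ k)).
Proof.
  induction k.
  - apply (trig_poly_const 0 1).
  - eapply trig_poly_ext; [apply trig_poly_cos_mult, IHk|].
    intros x. simpl. now rewrite RtoC_mult.
Qed.

Lemma trig_poly_expi_taylor_cos a K : trig_poly K (fun x => expi_taylor K (a * cos x)).
Proof.
  induction K.
  - apply (trig_poly_const 0 1).
  - eapply trig_poly_ext.
    + apply trig_poly_plus; [apply (trig_poly_le K); [lia | apply IHK]|].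
      apply (trig_poly_scal _ (Ci ^ S K * RtoC (a ^ S K / INR (fact (S K))))%C), trig_poly_cos_pow.
    + intros x. cbn [expi_taylor]. rewrite Rpow_mult_distr.
      replace (a ^ S K * cos x ^ S K / INR (fact (S K)))
        with (a ^ S K / INR (fact (S K)) * cos x ^ S K) by (unfold Rdiv; ring).
      rewrite RtoC_mult. generalize (Ci ^ S K)%C; intros c. ring.
Qed.

(** * The kernel of [e^{it Delta}] as a Fourier coefficient *)

Definition schr_phase (t : R) (m : Z) (x : R) : R := t * (2 * cos x - 2) + IZR m * x.

Definition schr_symbol (t x : R) : C := expi (t * (2 * cos x - 2)).

Lemma Ccontinuous_schr_symbol t : Ccontinuous (schr_symbol t).
Proof. apply Ccontinuous_expi; intros; Rcont. Qed.

Lemma schr_symbol_mult_expi t m x :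
  (schr_symbol t x * expi (IZR m * x))%C = expi (schr_phase t m x).
Proof. unfold schr_symbol, schr_phase. now rewrite expi_plus. Qed.

Lemma schr_kernel_fourier_coef t m : schr_kernel t m = fourier_coef m (schr_symbol t).
Proof.
  unfold fourier_coef.
  replace (fun x => schr_symbol t x * expi (IZR m * x))%C with (fun x => expi (schr_phase t m x))
    by (apply functional_extensionality; intros; now rewrite schr_symbol_mult_expi).
  unfold schr_kernel, CIpi, Ipi, schr_phase, expi. Ceq.
Qed.

Lemma L2sq_schr_symbol t : L2sq (schr_symbol t) = 2 * PI.
Proof.
  unfold L2sq. replace (fun x => Cnorm2 (schr_symbol t x)) with (fun _ : R => 1).
  - rewrite Ipi_const; ring.
  - apply functional_extensionality; intros x.
    rewrite Cnorm2_Cmod. unfold schr_symbol. rewrite Cmod_expi. ring.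
Qed.

Lemma schr_kernel_Cmod_le_1 t m : Cmod (schr_kernel t m) <= 1.
Proof.
  rewrite schr_kernel_fourier_coef.
  pose proof (bessel_inequality (Z.abs_nat m) _ (Ccontinuous_schr_symbol t)) as Hb.
  rewrite L2sq_schr_symbol in Hb.
  pose proof (zsumR_term_le (Z.abs_nat m) (fun m => Cnorm2 (fourier_coef m (schr_symbol t))) m
    (fun _ => Cnorm2_ge_0 _) ltac:(lia)) as Hm.
  cbv beta in Hm. rewrite Cnorm2_Cmod in Hm.
  pose proof PI_RGT_0. pose proof (Cmod_ge_0 (fourier_coef m (schr_symbol t))).
  assert (Cmod (fourier_coef m (schr_symbol t)) ^ 2 <= 1) by nra. nra.
Qed.

(* The Taylor polynomial of [expi] at [2 t cos x] is a trigonometric polynomial of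
   degree K, so best approximation bounds the mass missing from [|m| <= K]. *)
Lemma schr_kernel_mass t K : 0 <= t ->
  1 - ((2 * t) ^ S K / INR (fact (S K))) ^ 2 <= zsumR K (fun m => Cnorm2 (schr_kernel t m)).
Proof.
  intros Ht.
  set (eps := (2 * t) ^ S K / INR (fact (S K))).
  set (P := fun x => (expi (-2 * t) * expi_taylor K (2 * t * cos x))%C).
  assert (HP : trig_poly K P) by apply trig_poly_scal, trig_poly_expi_taylor_cos.
  assert (Herr : L2sq (fun x => schr_symbol t x - P x)%C <= 2 * PI * eps ^ 2).
  { unfold L2sq. rewrite <- Ipi_const.
    apply Ipi_le;
      [intros; apply continuous_Cnorm2;
       eauto using Ccontinuous_minus, Ccontinuous_schr_symbol, trig_poly_continuous
      | intros; Rcont |].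
    intros x. rewrite Cnorm2_Cmod.
    replace (schr_symbol t x - P x)%C
      with (expi (-2 * t) * (expi (2 * t * cos x) - expi_taylor K (2 * t * cos x)))%C.
    2:{ unfold schr_symbol, P. replace (t * (2 * cos x - 2)) with (-2 * t + 2 * t * cos x) by ring.
        rewrite expi_plus. ring. }
    rewrite Cmod_mult, Cmod_expi, Rmult_1_l.
    assert (Rabs (2 * t * cos x) ^ S K <= (2 * t) ^ S K).
    { apply pow_incr. split; [apply Rabs_pos|].
      rewrite Rabs_mult, (Rabs_right (2 * t)) by lra.
      pose proof (COS_bound x). pose proof (Rabs_pos (cos x)).
      assert (Rabs (cos x) <= 1) by (apply Rabs_le; lra). nra. }
    pose proof (Cmod_expi_sub_taylor K (2 * t * cos x)) as Htay.
    assert (Cmod (expi (2 * t * cos x) - expi_taylor K (2 * t * cos x)) <= eps).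
    { eapply Rle_trans; [apply Htay|]. unfold eps, Rdiv.
      apply Rmult_le_compat_r; auto. left; apply Rinv_0_lt_compat, INR_fact_lt_0. }
    pose proof (Cmod_ge_0 (expi (2 * t * cos x) - expi_taylor K (2 * t * cos x))). nra. }
  pose proof (L2sq_sub_trig_poly_ge K _ P (Ccontinuous_schr_symbol t) HP) as Happ.
  rewrite L2sq_schr_symbol in Happ.
  rewrite (zsumR_ext_in K _ (fun m => Cnorm2 (fourier_coef m (schr_symbol t))))
    by (intros; now rewrite schr_kernel_fourier_coef).
  pose proof PI_RGT_0. apply (Rmult_le_reg_l (2 * PI)); nra.
Qed.

(* Integration by parts: the phase [schr_phase t m] increases by [2 pi m] over a period. *)
Lemma CIpi_derive_phase_expi t m :
  CIpi (fun x => RtoC (IZR m - 2 * t * sin x) * expi (schr_phase t m x))%C = 0%C.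
Proof.
  unfold CIpi, expi; simpl.
  rewrite (Ipi_derive (fun x => sin (schr_phase t m x))),
    (Ipi_derive (fun x => - cos (schr_phase t m x))).
  - unfold schr_phase. rewrite cos_PI, cos_neg, cos_PI.
    replace (t * (2 * -1 - 2) + IZR m * PI) with (-4 * t + IZR m * PI) by ring.
    replace (t * (2 * -1 - 2) + IZR m * - PI) with (-4 * t - IZR m * PI) by ring.
    rewrite cos_plus_IZR_PI, sin_plus_IZR_PI. Ceq.
  - intros x. unfold schr_phase. auto_derive; auto. Rring.
  - intros x. unfold schr_phase. Rcont.
  - intros x. unfold schr_phase. auto_derive; auto. Rring.
  - intros x. unfold schr_phase. Rcont.
Qed.

Definition schr_symbol_dx (t x : R) : C := (RtoC (-2 * t * sin x) * (Ci * schr_symbol t x))%C.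

Lemma Ccontinuous_schr_symbol_dx t : Ccontinuous (schr_symbol_dx t).
Proof.
  apply Ccontinuous_mult; [apply Ccontinuous_RtoC; intros; Rcont|].
  apply Ccontinuous_mult; [apply Ccontinuous_const | apply Ccontinuous_schr_symbol].
Qed.

Lemma Cnorm2_fourier_coef_schr_symbol_dx t m :
  Cnorm2 (fourier_coef m (schr_symbol_dx t)) = IZR m ^ 2 * Cnorm2 (fourier_coef m (schr_symbol t)).
Proof.
  assert (Hdx : fourier_coef m (schr_symbol_dx t) = (- Ci * IZR m * fourier_coef m (schr_symbol t))%C).
  { unfold fourier_coef.
    replace (fun x => schr_symbol_dx t x * expi (IZR m * x))%C with
      (fun x => Ci * (RtoC (IZR m - 2 * t * sin x) * expi (schr_phase t m x))
                + (- Ci * IZR m) * (schr_symbol t x * expi (IZR m * x)))%C.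
    2:{ apply functional_extensionality; intros x. rewrite schr_symbol_mult_expi.
        unfold schr_symbol_dx. rewrite <- schr_symbol_mult_expi, !RtoC_minus, !RtoC_mult. ring. }
    assert (Hc : Ccontinuous (fun x => RtoC (IZR m - 2 * t * sin x) * expi (schr_phase t m x))%C).
    { apply Ccontinuous_mult; [apply Ccontinuous_RtoC | apply Ccontinuous_expi];
        intros; unfold schr_phase; Rcont. }
    rewrite CIpi_plus, !CIpi_scal, CIpi_derive_phase_expi;
      auto using Ccontinuous_mult, Ccontinuous_const, Ccontinuous_schr_symbol, Ccontinuous_expi_linear.
    ring. }
  rewrite Hdx. destruct (fourier_coef m (schr_symbol t)). unfold Cnorm2; simpl. ring.
Qed.

Lemma L2sq_schr_symbol_dx t : L2sq (schr_symbol_dx t) = 4 * t ^ 2 * PI.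
Proof.
  unfold L2sq.
  replace (fun x => Cnorm2 (schr_symbol_dx t x)) with (fun x => 4 * t ^ 2 * sin x ^ 2).
  - rewrite Ipi_scal by (intros; Rcont).
    rewrite (Ipi_derive (fun x => x / 2 - sin (2 * x) / 4)).
    + replace (2 * - PI) with (- (2 * PI)) by ring. rewrite sin_neg, sin_2PI. field.
    + intros x. auto_derive; auto. rewrite cos_2a_sin. field.
    + intros x; Rcont.
  - apply functional_extensionality; intros x. unfold schr_symbol_dx.
    rewrite !Cnorm2_Cmod, !Cmod_mult, Cmod_Ci, Cmod_R. unfold schr_symbol. rewrite Cmod_expi.
    rewrite !Rmult_1_r, pow2_abs. ring.
Qed.

Lemma schr_kernel_second_moment t M :
  zsumR M (fun m => IZR m ^ 2 * Cnorm2 (schr_kernel t m)) <= 2 * t ^ 2.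
Proof.
  pose proof (bessel_inequality M _ (Ccontinuous_schr_symbol_dx t)) as Hb.
  rewrite L2sq_schr_symbol_dx in Hb.
  rewrite (zsumR_ext_in M _ (fun m => Cnorm2 (fourier_coef m (schr_symbol_dx t)))).
  - pose proof PI_RGT_0. nra.
  - intros m _. now rewrite Cnorm2_fourier_coef_schr_symbol_dx, schr_kernel_fourier_coef.
Qed.

(** * Van der Corput estimates *)

Definition phase_C2 (g g1 g2 : R -> R) : Prop :=
  (forall x, is_derive g x (g1 x)) /\ (forall x, is_derive g1 x (g2 x)) /\
  (forall x, continuous g2 x).

Lemma continuous_of_is_derive (f df : R -> R) x :
  (forall y, is_derive f y (df y)) -> continuous f x.
Proof. intros H. apply (ex_derive_continuous f). eexists; apply H. Qed.

Lemma phase_C2_opp g g1 g2 :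
  phase_C2 g g1 g2 -> phase_C2 (fun x => - g x) (fun x => - g1 x) (fun x => - g2 x).
Proof.
  intros [H1 [H2 H3]]. split; [|split]; intros x.
  - now apply (is_derive_opp g).
  - now apply (is_derive_opp g1).
  - Rcont.
Qed.

Lemma phase_C2_shift g g1 g2 c : phase_C2 g g1 g2 -> phase_C2 (fun x => g x + c) g1 g2.
Proof.
  intros [H1 [H2 H3]]. split; [|split]; auto. intros x.
  replace (g1 x) with (g1 x + 0) by ring.
  apply (is_derive_plus g (fun _ => c)); auto.
  apply (is_derive_const (K:=R_AbsRing) (V:=R_NormedModule)).
Qed.

Lemma ex_RInt_continuous_on (f : R -> R) a b : a <= b ->
  (forall x, a <= x <= b -> continuous f x) -> ex_RInt f a b.
Proof.
  intros Hab Hf. apply (ex_RInt_continuous (V:=R_CompleteNormedModule)).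
  now rewrite Rmin_left, Rmax_right by lra.
Qed.

Lemma Rabs_RInt_split (f : R -> R) a b c : (forall x, continuous f x) ->
  Rabs (RInt f a b) <= Rabs (RInt f a c) + Rabs (RInt f c b).
Proof.
  intros Hf. rewrite <- (RInt_Chasles (V:=R_CompleteNormedModule) f a c b)
    by now apply ex_RInt_continuous_R.
  apply Rabs_triang.
Qed.

Lemma Rabs_RInt_cos_le_length (g : R -> R) a b : a <= b -> (forall x, continuous g x) ->
  Rabs (RInt (fun x => cos (g x)) a b) <= b - a.
Proof.
  intros Hab Hg. rewrite <- (Rmult_1_r (b - a)).
  apply abs_RInt_le_const; auto.
  - apply ex_RInt_continuous_R; intros; Rcont.
  - intros; apply Rabs_le, COS_bound.
Qed.

Lemma Rabs_RInt_mult_le (h d : R -> R) a b : a <= b ->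
  (forall x, a <= x <= b -> continuous h x) -> (forall x, a <= x <= b -> continuous d x) ->
  (forall x, a <= x <= b -> Rabs (h x) <= 1) ->
  ((forall x, a <= x <= b -> 0 <= d x) \/ (forall x, a <= x <= b -> d x <= 0)) ->
  Rabs (RInt (fun x => h x * d x) a b) <= Rabs (RInt d a b).
Proof.
  intros Hab Hh Hd Hb Hs.
  assert (Hint : forall f, (forall x, a <= x <= b -> continuous f x) ->
            ex_RInt f a b /\ ex_RInt (fun x => Rabs (f x)) a b).
  { intros f Hf. split; apply ex_RInt_continuous_on; auto.
    intros; now apply continuous_Rabs_comp, Hf. }
  assert (Hhd : forall x, a <= x <= b -> continuous (fun y => h y * d y) x)
    by (intros; apply continuous_Rmult; auto).
  destruct (Hint d Hd), (Hint _ Hhd).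
  eapply Rle_trans; [now apply abs_RInt_le|].
  apply Rle_trans with (RInt (fun x => Rabs (d x)) a b).
  - apply RInt_le; auto. intros x Hx. rewrite Rabs_mult.
    pose proof (Hb x ltac:(lra)). pose proof (Rabs_pos (d x)). nra.
  - destruct Hs as [Hs|Hs].
    + rewrite (RInt_ext _ d); [apply Rle_abs|].
      intros x Hx. rewrite Rmin_left, Rmax_right in Hx by lra. apply Rabs_right, Rle_ge, Hs; lra.
    + rewrite (RInt_ext _ (fun x => - d x)).
      * rewrite (RInt_opp d) by auto. change (opp (RInt d a b)) with (- RInt d a b).
        rewrite <- Rabs_Ropp. apply Rle_abs.
      * intros x Hx. rewrite Rmin_left, Rmax_right in Hx by lra. apply Rabs_left1, Hs; lra.
Qed.

Lemma continuous_derive_inv g1 g2 x : (forall y, is_derive g1 y (g2 y)) ->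
  (forall y, continuous g2 y) -> g1 x <> 0 -> continuous (fun y => - g2 y / g1 y ^ 2) x.
Proof.
  intros Hd2 Hc2 Hnz.
  assert (Hc1 : forall y, continuous g1 y) by (intros; now apply (continuous_of_is_derive g1 g2)).
  unfold Rdiv. apply continuous_Rmult; [Rcont|].
  apply (continuous_comp (fun y => g1 y ^ 2) Rinv); [Rcont|].
  apply continuity_pt_filterlim, continuity_pt_inv;
    [apply continuity_pt_filterlim, continuous_id | now apply pow_nonzero].
Qed.

Lemma RInt_cos_by_parts g g1 g2 a b : phase_C2 g g1 g2 -> a <= b ->
  (forall x, a <= x <= b -> g1 x <> 0) ->
  RInt (fun x => cos (g x)) a b
  = sin (g b) / g1 b - sin (g a) / g1 a - RInt (fun x => sin (g x) * (- g2 x / g1 x ^ 2)) a b.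
Proof.
  intros [Hd1 [Hd2 Hc2]] Hab Hnz.
  assert (Hc0 : forall x, continuous g x) by (intros; now apply (continuous_of_is_derive g g1)).
  set (du := fun x => - g2 x / g1 x ^ 2).
  assert (Hcdu : forall x, a <= x <= b -> continuous du x)
    by (intros; apply continuous_derive_inv; auto).
  assert (HF : forall x, a <= x <= b ->
            is_derive (fun y => sin (g y) * / g1 y) x (cos (g x) + sin (g x) * du x)).
  { intros x Hx.
    pose proof (is_derive_comp sin g x (cos (g x)) (g1 x) (is_derive_sin (g x)) (Hd1 x)) as H1.
    pose proof (is_derive_mult (fun y => sin (g y)) (fun y => / g1 y) x _ _ H1
      (is_derive_inv g1 x (g2 x) (Hd2 x) (Hnz x Hx)) ltac:(intros; apply Rmult_comm)) as H2.
    replace (cos (g x) + sin (g x) * du x)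
      with (plus (mult (scal (g1 x) (cos (g x))) (/ g1 x)) (mult (sin (g x)) (du x))); auto.
    change (g1 x * cos (g x) * / g1 x + sin (g x) * (- g2 x / g1 x ^ 2)
            = cos (g x) + sin (g x) * (- g2 x / g1 x ^ 2)).
    field. auto. }
  assert (Hint : RInt (fun x => cos (g x) + sin (g x) * du x) a b
                 = sin (g b) * / g1 b - sin (g a) * / g1 a).
  { apply is_RInt_unique, (is_RInt_derive (V:=R_CompleteNormedModule) (fun y => sin (g y) * / g1 y));
      intros x Hx; rewrite Rmin_left, Rmax_right in Hx by lra; [now apply HF|].
    apply continuous_Rplus; [Rcont|]. apply continuous_Rmult; [Rcont | auto]. }
  rewrite (RInt_plus (V:=R_CompleteNormedModule) (fun x => cos (g x)) (fun x => sin (g x) * du x)) in Hint.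
  - change (plus ?x ?y) with (x + y) in Hint. unfold du in Hint. unfold Rdiv at 1 2. lra.
  - apply ex_RInt_continuous_on; auto; intros; Rcont.
  - apply ex_RInt_continuous_on; auto; intros; apply continuous_Rmult; [Rcont | auto].
Qed.

(* First derivative test: after integrating by parts, [1 / g1] is monotone on [a, b], so its
   total variation is at most [1 / mu]. *)
Lemma vdc_first_derivative_pos g g1 g2 a b mu : phase_C2 g g1 g2 -> a <= b -> 0 < mu ->
  (forall x, a <= x <= b -> mu <= g1 x) ->
  ((forall x, a <= x <= b -> 0 <= g2 x) \/ (forall x, a <= x <= b -> g2 x <= 0)) ->
  Rabs (RInt (fun x => cos (g x)) a b) <= 3 / mu.
Proof.
  intros Hp Hab Hmu Hg1 Hs. pose proof Hp as [Hd1 [Hd2 Hc2]].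
  assert (Hc0 : forall x, continuous g x) by (intros; now apply (continuous_of_is_derive g g1)).
  assert (Hnz : forall x, a <= x <= b -> g1 x <> 0) by (intros x Hx; specialize (Hg1 x Hx); lra).
  rewrite (RInt_cos_by_parts g g1 g2) by auto.
  set (du := fun x => - g2 x / g1 x ^ 2).
  assert (Hvar : RInt du a b = / g1 b - / g1 a).
  { apply is_RInt_unique, (is_RInt_derive (V:=R_CompleteNormedModule) (fun y => / g1 y));
      intros x Hx; rewrite Rmin_left, Rmax_right in Hx by lra;
      [apply is_derive_inv | apply continuous_derive_inv]; auto. }
  assert (Hs2 : Rabs (RInt (fun x => sin (g x) * du x) a b) <= Rabs (RInt du a b)).
  { apply (Rabs_RInt_mult_le (fun x => sin (g x)) du); auto.
    - intros; Rcont.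
    - intros; apply continuous_derive_inv; auto.
    - intros; apply Rabs_le, SIN_bound.
    - destruct Hs as [Hs|Hs]; [right|left]; intros x Hx; unfold du; specialize (Hs x Hx);
        pose proof (pow_lt (g1 x) 2 (Rlt_le_trans _ _ _ Hmu (Hg1 x Hx))); unfold Rdiv;
        [apply Rmult_le_0_r|apply Rmult_le_pos]; try lra; left; apply Rinv_0_lt_compat; lra. }
  rewrite Hvar in Hs2. unfold du in Hs2.
  assert (Hinv : forall x, a <= x <= b -> 0 < / g1 x <= / mu).
  { intros x Hx. specialize (Hg1 x Hx). split.
    - apply Rinv_0_lt_compat; lra.
    - apply Rinv_le_contravar; lra. }
  assert (Hsin : forall x, a <= x <= b -> Rabs (sin (g x) / g1 x) <= / mu).
  { intros x Hx. specialize (Hinv x Hx). unfold Rdiv.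
    rewrite Rabs_mult, (Rabs_right (/ g1 x)) by lra.
    pose proof (SIN_bound (g x)). assert (Rabs (sin (g x)) <= 1) by (apply Rabs_le; lra).
    pose proof (Rabs_pos (sin (g x))). nra. }
  pose proof (Hinv a ltac:(lra)). pose proof (Hinv b ltac:(lra)).
  pose proof (Hsin a ltac:(lra)). pose proof (Hsin b ltac:(lra)).
  assert (Rabs (/ g1 b - / g1 a) <= / mu) by (apply Rabs_le; lra).
  unfold Rminus. eapply Rle_trans; [apply Rabs_triang|]. rewrite Rabs_Ropp.
  eapply Rle_trans; [apply Rplus_le_compat_r, Rabs_triang|]. rewrite Rabs_Ropp.
  replace (3 / mu) with (/ mu + / mu + / mu) by (field; lra). lra.
Qed.

Lemma vdc_first_derivative g g1 g2 a b mu : phase_C2 g g1 g2 -> a <= b -> 0 < mu ->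
  ((forall x, a <= x <= b -> mu <= g1 x) \/ (forall x, a <= x <= b -> g1 x <= - mu)) ->
  ((forall x, a <= x <= b -> 0 <= g2 x) \/ (forall x, a <= x <= b -> g2 x <= 0)) ->
  Rabs (RInt (fun x => cos (g x)) a b) <= 3 / mu.
Proof.
  intros Hp Hab Hmu [Hg|Hg] Hs; [eapply vdc_first_derivative_pos; eauto|].
  rewrite (RInt_ext _ (fun x => cos (- g x))) by (intros; now rewrite cos_neg).
  apply (vdc_first_derivative_pos _ (fun x => - g1 x) (fun x => - g2 x)); auto using phase_C2_opp.
  - intros x Hx; specialize (Hg x Hx); lra.
  - destruct Hs as [Hs|Hs]; [right|left]; intros x Hx; specialize (Hs x Hx); lra.
Qed.

Lemma is_derive_ge_linear g1 g2 a x lam : (forall y, is_derive g1 y (g2 y)) -> a <= x ->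
  (forall y, a <= y <= x -> lam <= g2 y) -> g1 a + lam * (x - a) <= g1 x.
Proof.
  intros Hd Hax Hl.
  destruct (MVT_gen g1 a x g2) as [c [Hc Hm]].
  - intros; apply Hd.
  - intros; apply continuity_pt_filterlim, (continuous_of_is_derive g1 g2 _ Hd).
  - rewrite Rmin_left, Rmax_right in Hc by lra. specialize (Hl c Hc). nra.
Qed.

Lemma sqrt_mult_inv_sqrt lam : 0 < lam -> lam * / sqrt lam = sqrt lam.
Proof.
  intros Hl. pose proof (sqrt_lt_R0 lam Hl).
  rewrite <- (sqrt_sqrt lam) at 1 by lra. field. lra.
Qed.

(* Away from an initial stretch of length [1 / sqrt lam], the slope [g1] exceeds
   [sqrt lam]. *)
Lemma vdc_second_derivative_right g g1 g2 a b lam : phase_C2 g g1 g2 -> a <= b -> 0 < lam ->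
  (forall x, a <= x <= b -> lam <= g2 x) -> 0 <= g1 a ->
  Rabs (RInt (fun x => cos (g x)) a b) <= 4 / sqrt lam.
Proof.
  intros Hp Hab Hl Hg2 Hg1a. pose proof Hp as [Hd1 [Hd2 _]].
  assert (Hc0 : forall x, continuous g x) by (intros; now apply (continuous_of_is_derive g g1)).
  pose proof (sqrt_lt_R0 lam Hl). pose proof (sqrt_mult_inv_sqrt lam Hl).
  set (d := / sqrt lam) in *. assert (Hd : 0 < d) by now apply Rinv_0_lt_compat.
  unfold Rdiv; fold d.
  destruct (Rle_dec b (a + d)).
  { pose proof (Rabs_RInt_cos_le_length g a b Hab Hc0). lra. }
  eapply Rle_trans; [apply (Rabs_RInt_split _ a b (a + d)); intros; Rcont|].
  pose proof (Rabs_RInt_cos_le_length g a (a + d) ltac:(lra) Hc0).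
  enough (Rabs (RInt (fun x => cos (g x)) (a + d) b) <= 3 * d) by lra.
  apply (vdc_first_derivative g g1 g2 _ _ (sqrt lam)); auto; try lra.
  - left. intros x Hx.
    pose proof (is_derive_ge_linear g1 g2 a x lam Hd2 ltac:(lra) ltac:(intros; apply Hg2; lra)).
    nra.
  - left; intros x Hx. specialize (Hg2 x ltac:(lra)). lra.
Qed.

Lemma vdc_second_derivative_left g g1 g2 a b lam : phase_C2 g g1 g2 -> a <= b -> 0 < lam ->
  (forall x, a <= x <= b -> lam <= g2 x) -> g1 b <= 0 ->
  Rabs (RInt (fun x => cos (g x)) a b) <= 4 / sqrt lam.
Proof.
  intros Hp Hab Hl Hg2 Hg1b. pose proof Hp as [Hd1 [Hd2 _]].
  assert (Hc0 : forall x, continuous g x) by (intros; now apply (continuous_of_is_derive g g1)).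
  pose proof (sqrt_lt_R0 lam Hl). pose proof (sqrt_mult_inv_sqrt lam Hl).
  set (d := / sqrt lam) in *. assert (Hd : 0 < d) by now apply Rinv_0_lt_compat.
  unfold Rdiv; fold d.
  destruct (Rle_dec (b - d) a).
  { pose proof (Rabs_RInt_cos_le_length g a b Hab Hc0). lra. }
  eapply Rle_trans; [apply (Rabs_RInt_split _ a b (b - d)); intros; Rcont|].
  pose proof (Rabs_RInt_cos_le_length g (b - d) b ltac:(lra) Hc0).
  enough (Rabs (RInt (fun x => cos (g x)) a (b - d)) <= 3 * d) by lra.
  apply (vdc_first_derivative g g1 g2 _ _ (sqrt lam)); auto; try lra.
  - right. intros x Hx.
    pose proof (is_derive_ge_linear g1 g2 x b lam Hd2 ltac:(lra) ltac:(intros; apply Hg2; lra)).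
    nra.
  - left; intros x Hx. specialize (Hg2 x ltac:(lra)). lra.
Qed.

Lemma vdc_second_derivative_pos g g1 g2 a b lam : phase_C2 g g1 g2 -> a <= b -> 0 < lam ->
  (forall x, a <= x <= b -> lam <= g2 x) ->
  Rabs (RInt (fun x => cos (g x)) a b) <= 8 / sqrt lam.
Proof.
  intros Hp Hab Hl Hg2. pose proof Hp as [Hd1 [Hd2 _]].
  assert (Hc1 : forall x, continuous g1 x) by (intros; now apply (continuous_of_is_derive g1 g2)).
  pose proof (sqrt_lt_R0 lam Hl).
  assert (H48 : 4 / sqrt lam <= 8 / sqrt lam)
    by (unfold Rdiv; apply Rmult_le_compat_r; [left; now apply Rinv_0_lt_compat | lra]).
  destruct (Rle_dec 0 (g1 a)).
  { eapply Rle_trans; [apply (vdc_second_derivative_right g g1 g2 a b lam)|]; auto. }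
  destruct (Rle_dec (g1 b) 0).
  { eapply Rle_trans; [apply (vdc_second_derivative_left g g1 g2 a b lam)|]; auto; lra. }
  assert (Hab' : a < b) by (destruct (Req_dec a b) as [<-|]; lra).
  destruct (IVT g1 a b) as [c [Hc Hz]]; try lra.
  - intros x; apply continuity_pt_filterlim, Hc1.
  - eapply Rle_trans; [apply (Rabs_RInt_split _ a b c); intros; Rcont; eapply continuous_of_is_derive; eauto|].
    pose proof (vdc_second_derivative_left g g1 g2 a c lam Hp ltac:(lra) Hl
      ltac:(intros; apply Hg2; lra) ltac:(lra)).
    pose proof (vdc_second_derivative_right g g1 g2 c b lam Hp ltac:(lra) Hl
      ltac:(intros; apply Hg2; lra) ltac:(lra)).
    unfold Rdiv in *. lra.
Qed.

Lemma vdc_second_derivative g g1 g2 a b lam : phase_C2 g g1 g2 -> a <= b -> 0 < lam ->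
  ((forall x, a <= x <= b -> lam <= g2 x) \/ (forall x, a <= x <= b -> g2 x <= - lam)) ->
  Rabs (RInt (fun x => cos (g x)) a b) <= 8 / sqrt lam.
Proof.
  intros Hp Hab Hl [Hg|Hg]; [eapply vdc_second_derivative_pos; eauto|].
  rewrite (RInt_ext _ (fun x => cos (- g x))) by (intros; now rewrite cos_neg).
  apply (vdc_second_derivative_pos _ (fun x => - g1 x) (fun x => - g2 x)); auto using phase_C2_opp.
  intros x Hx; specialize (Hg x Hx); lra.
Qed.

(** * Decay of the kernel inside the light cone *)

Lemma sin_1_5_ge : 19/100 <= sin (1/5).
Proof.
  pose proof PI2_1. pose proof (SIN (1/5) ltac:(lra) ltac:(lra)) as Hs.
  unfold sin_lb, sin_approx, sin_term in Hs. simpl in Hs. lra.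
Qed.

Lemma cos_1_5_ge : 98/100 <= cos (1/5).
Proof.
  pose proof PI2_1. pose proof (COS (1/5) ltac:(lra) ltac:(lra)) as Hc.
  unfold cos_lb, cos_approx, cos_term in Hc. simpl in Hc. lra.
Qed.

Lemma cos_Rabs x : cos (Rabs x) = cos x.
Proof. unfold Rabs; destruct (Rcase_abs x); auto. apply cos_neg. Qed.

Lemma cos_ge_sin_1_5 x : Rabs x <= PI/2 - 1/5 -> sin (1/5) <= cos x.
Proof.
  intros H. pose proof PI2_1. rewrite <- cos_Rabs, <- cos_shift.
  apply cos_decr_1; try lra. apply Rabs_pos.
Qed.

Lemma cos_le_opp_sin_1_5 x : PI/2 + 1/5 <= Rabs x <= PI -> cos x <= - sin (1/5).
Proof.
  intros H. pose proof PI2_1. rewrite <- cos_Rabs.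
  replace (- sin (1/5)) with (cos (PI/2 + 1/5)) by (rewrite cos_plus, cos_PI2, sin_PI2; ring).
  apply cos_decr_1; lra.
Qed.

Lemma sin_ge_cos_1_5 x : Rabs (x - PI/2) <= 1/5 -> cos (1/5) <= sin x.
Proof.
  intros H. pose proof PI2_1.
  replace (sin x) with (cos (Rabs (x - PI/2))).
  - apply cos_decr_1; try lra. apply Rabs_pos.
  - rewrite cos_Rabs, <- cos_neg. replace (- (x - PI/2)) with (PI/2 - x) by ring. apply cos_shift.
Qed.

(* [0, PI] is cut at [PI/2 - 1/5], [PI/2], [PI/2 + 1/5]: near [PI/2] the slope
   [IZR m - 2 t sin x] is at least [3 t / 50] in absolute value because [|m| <= 19 t / 10],
   elsewhere the curvature [2 t |cos x|] is at least [2 t sin (1/5)]. *)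
Lemma Rabs_RInt_cos_phase_half_le (t : R) (m : Z) (g : R -> R) : 0 < t ->
  Rabs (IZR m) <= 19/10 * t ->
  phase_C2 g (fun x => -2 * t * sin x + IZR m) (fun x => -2 * t * cos x) ->
  Rabs (RInt (fun x => cos (g x)) 0 PI)
  <= 2 * (8 / sqrt (2 * t * sin (1/5))) + 2 * (3 / (3 * t / 50)).
Proof.
  intros Ht Hm Hp.
  set (lam := 2 * t * sin (1/5)). set (mu := 3 * t / 50).
  pose proof PI2_1. pose proof sin_1_5_ge. pose proof cos_1_5_ge.
  assert (Hl : 0 < lam) by (unfold lam; nra). assert (Hmu : 0 < mu) by (unfold mu; lra).
  assert (Hc : forall x, continuous (fun x => cos (g x)) x).
  { intros; apply continuous_cos_comp. destruct Hp as [Hd _]. apply (continuous_of_is_derive g _ _ Hd). }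
  apply Rabs_le_between in Hm.
  set (b1 := PI/2 - 1/5). set (b2 := PI/2 + 1/5).
  assert (A1 : Rabs (RInt (fun x => cos (g x)) 0 b1) <= 8 / sqrt lam).
  { apply (vdc_second_derivative g (fun x => -2 * t * sin x + IZR m) (fun x => -2 * t * cos x));
      auto; unfold b1 in *; try lra.
    right. intros x Hx. assert (sin (1/5) <= cos x) by (apply cos_ge_sin_1_5, Rabs_le; lra).
    unfold lam; nra. }
  assert (A2 : Rabs (RInt (fun x => cos (g x)) b1 (PI/2)) <= 3 / mu).
  { apply (vdc_first_derivative g (fun x => -2 * t * sin x + IZR m) (fun x => -2 * t * cos x));
      auto; unfold b1 in *; try lra.
    - right. intros x Hx. assert (cos (1/5) <= sin x) by (apply sin_ge_cos_1_5, Rabs_le; lra).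
      unfold mu; nra.
    - right. intros x Hx. assert (0 <= cos x) by (apply cos_ge_0; lra). nra. }
  assert (A3 : Rabs (RInt (fun x => cos (g x)) (PI/2) b2) <= 3 / mu).
  { apply (vdc_first_derivative g (fun x => -2 * t * sin x + IZR m) (fun x => -2 * t * cos x));
      auto; unfold b2 in *; try lra.
    - right. intros x Hx. assert (cos (1/5) <= sin x) by (apply sin_ge_cos_1_5, Rabs_le; lra).
      unfold mu; nra.
    - left. intros x Hx. assert (cos x <= 0) by (apply cos_le_0; lra). nra. }
  assert (A4 : Rabs (RInt (fun x => cos (g x)) b2 PI) <= 8 / sqrt lam).
  { apply (vdc_second_derivative g (fun x => -2 * t * sin x + IZR m) (fun x => -2 * t * cos x));
      auto; unfold b2 in *; try lra.
    left. intros x Hx.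
    assert (cos x <= - sin (1/5)) by (apply cos_le_opp_sin_1_5; rewrite Rabs_right; lra).
    unfold lam; nra. }
  set (F := fun x => cos (g x)) in *.
  pose proof (Rabs_RInt_split F 0 PI b1 Hc). pose proof (Rabs_RInt_split F b1 PI (PI/2) Hc).
  pose proof (Rabs_RInt_split F (PI/2) PI b2 Hc).
  lra.
Qed.

Lemma RInt_comp_opp_R (f : R -> R) a b : (forall x, continuous f x) ->
  RInt (fun y => f (- y)) a b = RInt f (- b) (- a).
Proof.
  intros Hf.
  assert (Hex : forall c d, ex_RInt f c d) by (intros; now apply ex_RInt_continuous_R).
  rewrite <- (opp_RInt_swap f) by auto.
  pose proof (RInt_comp_lin f (-1) 0 a b (Hex _ _)) as Hlin.
  replace (-1 * a + 0) with (- a) in Hlin by ring. replace (-1 * b + 0) with (- b) in Hlin by ring.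
  rewrite <- Hlin, <- RInt_opp by (apply (ex_RInt_comp_lin f); auto).
  apply RInt_ext; intros x _.
  change (f (- x) = - (-1 * f (-1 * x + 0))). replace (-1 * x + 0) with (- x) by ring. ring.
Qed.

Lemma phase_C2_comp_opp g g1 g2 :
  phase_C2 g g1 g2 -> phase_C2 (fun x => g (- x)) (fun x => - g1 (- x)) (fun x => g2 (- x)).
Proof.
  intros [H1 [H2 H3]]. split; [|split]; intros x.
  - replace (- g1 (- x)) with (-1 * g1 (- x)) by ring.
    apply (is_derive_comp g Ropp); auto. auto_derive; auto; ring.
  - replace (g2 (- x)) with (- (-1 * g2 (- x))) by ring.
    apply (is_derive_opp (fun y => g1 (- y))).
    apply (is_derive_comp g1 Ropp); auto. auto_derive; auto; ring.
  - apply (continuous_comp Ropp g2); [apply (continuous_Ropp (fun y => y)), continuous_id | apply H3].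
Qed.

Lemma phase_C2_ext g g1 g2 h1 h2 : phase_C2 g g1 g2 ->
  (forall x, g1 x = h1 x) -> (forall x, g2 x = h2 x) -> phase_C2 g h1 h2.
Proof.
  intros [H1 [H2 H3]] E1 E2. split; [|split]; intros x.
  - rewrite <- E1; auto.
  - rewrite <- E2. apply (is_derive_ext g1); auto.
  - apply (continuous_ext g2); auto.
Qed.

(* The reflection [x -> - x] turns the phase for [m] into the one for [- m]. *)
Lemma Rabs_RInt_cos_schr_phase_le (t : R) (m : Z) (g : R -> R) : 0 < t ->
  Rabs (IZR m) <= 19/10 * t ->
  phase_C2 g (fun x => -2 * t * sin x + IZR m) (fun x => -2 * t * cos x) ->
  Rabs (RInt (fun x => cos (g x)) (- PI) PI)
  <= 4 * (8 / sqrt (2 * t * sin (1/5))) + 4 * (3 / (3 * t / 50)).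
Proof.
  intros Ht Hm Hp.
  assert (Hc : forall x, continuous (fun x => cos (g x)) x).
  { intros; apply continuous_cos_comp. destruct Hp as [Hd _]. apply (continuous_of_is_derive g _ _ Hd). }
  assert (Hneg : Rabs (RInt (fun x => cos (g (- x))) 0 PI)
          <= 2 * (8 / sqrt (2 * t * sin (1/5))) + 2 * (3 / (3 * t / 50))).
  { apply (Rabs_RInt_cos_phase_half_le t (- m)); auto.
    - now rewrite opp_IZR, Rabs_Ropp.
    - apply (phase_C2_ext _ _ _ _ _ (phase_C2_comp_opp _ _ _ Hp)); intros x.
      + rewrite sin_neg, opp_IZR. ring.
      + now rewrite cos_neg. }
  pose proof (Rabs_RInt_cos_phase_half_le t m g Ht Hm Hp) as Hpos.
  set (F := fun x => cos (g x)) in *.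
  pose proof (Rabs_RInt_split F (- PI) PI 0 Hc) as Hsplit.
  rewrite <- Ropp_0 in Hsplit at 1. rewrite <- RInt_comp_opp_R in Hsplit by auto.
  unfold F in *. lra.
Qed.

Lemma phase_C2_schr_phase t m :
  phase_C2 (schr_phase t m) (fun x => -2 * t * sin x + IZR m) (fun x => -2 * t * cos x).
Proof.
  unfold schr_phase. split; [|split]; intros x.
  - auto_derive; auto. Rring.
  - auto_derive; auto. Rring.
  - Rcont.
Qed.

Lemma vdc_sum_le_inv_sqrt t : 1/4 <= t ->
  4 * (8 / sqrt (2 * t * sin (1/5))) + 4 * (3 / (3 * t / 50)) <= 480 / sqrt t.
Proof.
  intros Ht. pose proof sin_1_5_ge.
  set (u := sqrt t). assert (Hu : 0 < u) by (apply sqrt_lt_R0; lra).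
  assert (Htu : t = u * u) by (unfold u; rewrite sqrt_sqrt; lra).
  assert (Hu2 : 1/2 <= u).
  { unfold u. rewrite <- (sqrt_pow2 (1/2)) by lra. apply sqrt_le_1_alt. nra. }
  set (q := sqrt (2 * sin (1/5))).
  assert (Hq : 6/10 <= q).
  { unfold q. rewrite <- (sqrt_pow2 (6/10)) by lra. apply sqrt_le_1_alt. nra. }
  replace (sqrt (2 * t * sin (1/5))) with (q * u)
    by (unfold q, u; rewrite <- sqrt_mult by lra; f_equal; ring).
  rewrite Htu.
  replace (4 * (8 / (q * u)) + 4 * (3 / (3 * (u * u) / 50))) with ((32 / q) / u + (200 / u) / u)
    by (field; split; lra).
  replace (480 / u) with (80 / u + 400 / u) by (field; lra).
  assert (32 / q <= 80) by (apply Rle_trans with (32 / (6/10)); [apply Rmult_le_compat_l, Rinv_le_contravar|]; lra).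
  assert (200 / u <= 400) by (apply Rle_trans with (200 / (1/2)); [apply Rmult_le_compat_l, Rinv_le_contravar|]; lra).
  unfold Rdiv. apply Rplus_le_compat; apply Rmult_le_compat_r; try (left; apply Rinv_0_lt_compat); lra.
Qed.

Lemma schr_kernel_Cmod_le_decay t m : 1/4 <= t -> Rabs (IZR m) <= 19/10 * t ->
  Cmod (schr_kernel t m) <= 160 / sqrt t.
Proof.
  intros Ht Hm.
  assert (Hcos : Rabs (RInt (fun x => cos (schr_phase t m x)) (- PI) PI) <= 480 / sqrt t).
  { eapply Rle_trans; [|apply vdc_sum_le_inv_sqrt; auto].
    apply (Rabs_RInt_cos_schr_phase_le t m); auto using phase_C2_schr_phase; lra. }
  assert (Hsin : Rabs (RInt (fun x => sin (schr_phase t m x)) (- PI) PI) <= 480 / sqrt t).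
  { rewrite (RInt_ext _ (fun x => cos (schr_phase t m x + - (PI / 2)))).
    - eapply Rle_trans; [|apply vdc_sum_le_inv_sqrt; auto].
      apply (Rabs_RInt_cos_schr_phase_le t m); auto using phase_C2_shift, phase_C2_schr_phase; lra.
    - intros x _. rewrite <- cos_shift, <- cos_neg. f_equal; ring. }
  eapply Rle_trans; [apply Cmod_le_Rabs_fst_snd|]. unfold schr_kernel; cbn [fst snd].
  unfold schr_phase in Hcos, Hsin. rewrite !Rabs_mult.
  pose proof PI_RGT_0. pose proof PI2_3_2. assert (0 < sqrt t) by (apply sqrt_lt_R0; lra).
  rewrite Rabs_right by (left; apply Rinv_0_lt_compat; lra).
  assert (/ (2 * PI) <= / 6) by (apply Rinv_le_contravar; lra).
  assert (0 < / (2 * PI)) by (apply Rinv_0_lt_compat; lra).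
  assert (0 < / sqrt t) by (apply Rinv_0_lt_compat; lra).
  rewrite <- Rmult_plus_distr_l.
  apply Rle_trans with (/ (2 * PI) * (960 / sqrt t)); [apply Rmult_le_compat_l; lra|].
  apply Rle_trans with (/ 6 * (960 / sqrt t)); [apply Rmult_le_compat_r; unfold Rdiv; lra|].
  unfold Rdiv. lra.
Qed.

(** * The initial datum *)

Lemma is_series_finite {K : AbsRing} {V : NormedModule K} (u : nat -> V) N :
  (forall k, (N < k)%nat -> u k = zero) -> is_series u (sum_n u N).
Proof.
  intros H. unfold is_series.
  apply (filterlim_ext_loc (fun _ => sum_n u N)); [|apply filterlim_const].
  exists N. intros n Hn. induction n.
  - now replace N with 0%nat by lia.
  - destruct (Nat.eq_dec N (S n)) as [->|Hne]; auto.
    rewrite sum_Sn, <- IHn, H, plus_zero_r by lia. reflexivity.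
Qed.

Lemma schr_value_finite_support (a : Z -> C) t n N :
  (forall j, (Z.of_nat N < Z.abs j)%Z -> a j = 0%C) ->
  schr_value a t n
    (sum_n (fun k => Cmult (a (Z.of_nat k)) (schr_kernel t (n - Z.of_nat k)%Z)) N
     + sum_n (fun k => Cmult (a (- (Z.of_nat k + 1))%Z) (schr_kernel t (n + (Z.of_nat k + 1))%Z)) N)%C.
Proof.
  intros Ha. do 2 eexists. split; [|split; [|reflexivity]];
    apply (is_series_finite (K:=C_AbsRing) (V:=C_NormedModule));
    intros k Hk; rewrite Ha by lia; apply Cmult_0_l.
Qed.

Lemma sum_n_RtoC (g : nat -> R) n : @sum_n C_AbelianMonoid (fun k => RtoC (g k)) n = RtoC (sum_n g n).
Proof.
  induction n; [now rewrite !sum_O|].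
  rewrite !sum_Sn, IHn. exact (eq_sym (RtoC_plus (sum_n g n) (g (S n)))).
Qed.

Lemma sum_n_opp_plus_sum_n_succ (F : Z -> R) K :
  sum_n (fun k => F (- Z.of_nat k)%Z) K + sum_n (fun k => F (Z.of_nat (S k))) K
  = zsumR K F + F (Z.of_nat (S K)).
Proof.
  induction K; [rewrite !sum_O; simpl; ring|].
  rewrite !sum_Sn. change (plus ?x ?y) with (x + y). cbn [zsumR].
  replace (sum_n (fun k => F (- Z.of_nat k)%Z) K + F (- Z.of_nat (S K))%Z +
      (sum_n (fun k => F (Z.of_nat (S k))) K + F (Z.of_nat (S (S K)))))
    with ((sum_n (fun k => F (- Z.of_nat k)%Z) K + sum_n (fun k => F (Z.of_nat (S k))) K)
      + F (- Z.of_nat (S K))%Z + F (Z.of_nat (S (S K)))) by ring.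
  rewrite IHK. ring.
Qed.

Definition Csgn_conj (z : C) : C :=
  if Req_EM_T (Cmod z) 0 then 0%C else (RtoC (/ Cmod z) * Cconj z)%C.

Lemma Cmod_Csgn_conj_le_1 z : Cmod (Csgn_conj z) <= 1.
Proof.
  unfold Csgn_conj. destruct (Req_EM_T (Cmod z) 0); [rewrite Cmod_0; lra|].
  rewrite Cmod_mult, Cmod_conj, Cmod_R. pose proof (Cmod_ge_0 z).
  rewrite Rabs_right by (left; apply Rinv_0_lt_compat; lra). rewrite Rinv_l; lra.
Qed.

Lemma Csgn_conj_mult z : (Csgn_conj z * z)%C = RtoC (Cmod z).
Proof.
  unfold Csgn_conj. destruct (Req_EM_T (Cmod z) 0) as [Hz|Hz].
  - rewrite Hz. apply Cmod_eq_0 in Hz. rewrite Hz. ring.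
  - rewrite <- Cmult_assoc, (Cmult_comm (Cconj z)), <- Cmod2_conj, <- RtoC_mult.
    f_equal. field; auto.
Qed.

(* [19/10] lies below [2 cos (1/5)], so the slope of the phase stays away from 0 near
   [+-PI/2], and above [sqrt 2], so the second moment bound leaves mass in the cone. *)
Definition cone_window (t : R) (m : Z) : R :=
  if Rle_dec (Rabs (IZR m)) (19/10 * t) then 1 else 0.

Definition cone_kernel (t : R) (m : Z) : R := cone_window t m * Cmod (schr_kernel t m).

Definition extremal_datum (t : R) (j : Z) : C :=
  if Rle_dec (Rabs (IZR j)) (19/10 * t) then Csgn_conj (schr_kernel t (- j)) else 0%C.

Lemma Cmod_extremal_datum_le_1 t j : Cmod (extremal_datum t j) <= 1.
Proof.
  unfold extremal_datum. destruct Rle_dec; [apply Cmod_Csgn_conj_le_1 | rewrite Cmod_0; lra].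
Qed.

Lemma extremal_datum_mult_kernel t j :
  (extremal_datum t j * schr_kernel t (- j))%C = RtoC (cone_kernel t (- j)).
Proof.
  unfold extremal_datum, cone_kernel, cone_window. rewrite opp_IZR, Rabs_Ropp.
  destruct Rle_dec; [rewrite Csgn_conj_mult, Rmult_1_l | rewrite Rmult_0_l]; Ceq.
Qed.

Lemma schr_value_extremal_datum t K : 19/10 * t < INR K + 1 ->
  schr_value (extremal_datum t) t 0 (RtoC (zsumR K (cone_kernel t))).
Proof.
  intros HK.
  assert (Hout : forall m, (Z.of_nat K < Z.abs m)%Z -> 19/10 * t < Rabs (IZR m)).
  { intros m Hm. rewrite <- abs_IZR.
    apply Rlt_le_trans with (INR K + 1); auto.
    rewrite INR_IZR_INZ, <- plus_IZR. apply IZR_le. lia. }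
  assert (Hsupp : forall j, (Z.of_nat K < Z.abs j)%Z -> extremal_datum t j = 0%C).
  { intros j Hj. unfold extremal_datum.
    destruct Rle_dec as [Hle|]; [specialize (Hout j Hj); lra | reflexivity]. }
  pose proof (schr_value_finite_support _ t 0 K Hsupp) as Hv.
  rewrite (sum_n_ext (fun k => Cmult (extremal_datum t (Z.of_nat k)) (schr_kernel t (0 - Z.of_nat k)%Z))
      (fun k => RtoC (cone_kernel t (- Z.of_nat k)))),
    (sum_n_ext (fun k => Cmult (extremal_datum t (- (Z.of_nat k + 1))%Z)
                              (schr_kernel t (0 + (Z.of_nat k + 1))%Z))
      (fun k => RtoC (cone_kernel t (Z.of_nat (S k))))), !sum_n_RtoC,
    <- RtoC_plus, sum_n_opp_plus_sum_n_succ in Hv.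
  - replace (cone_kernel t (Z.of_nat (S K))) with 0 in Hv; [now rewrite Rplus_0_r in Hv|].
    unfold cone_kernel, cone_window. destruct Rle_dec as [Hle|]; [|ring].
    specialize (Hout (Z.of_nat (S K)) ltac:(lia)). lra.
  - intros k. replace (Z.of_nat (S k)) with (- - (Z.of_nat k + 1))%Z by lia.
    rewrite <- extremal_datum_mult_kernel. do 2 f_equal; lia.
  - intros k. rewrite <- extremal_datum_mult_kernel. do 2 f_equal; lia.
Qed.

Lemma zsumR_sq_le M F S : (forall m, 0 <= F m <= S) -> zsumR M (fun m => F m ^ 2) <= S * zsumR M F.
Proof.
  intros HF. rewrite <- zsumR_scal. apply zsumR_le. intros m. specialize (HF m). nra.
Qed.

(* Chebyshev: the second moment bound leaves at most [2 t^2 / (19 t / 10)^2 = 200/361]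
   of the mass outside the cone. *)
Lemma cone_kernel_sq_sum_ge t K : 0 < t -> (2 * t) ^ S K / INR (fact (S K)) <= 1/10 ->
  2/5 <= zsumR K (fun m => cone_kernel t m ^ 2).
Proof.
  intros Ht HK. set (r := 19/10 * t). assert (Hr : 0 < r) by (unfold r; lra).
  assert (Hmass : 99/100 <= zsumR K (fun m => Cnorm2 (schr_kernel t m))).
  { pose proof (schr_kernel_mass t K ltac:(lra)).
    assert (0 <= (2 * t) ^ S K / INR (fact (S K))).
    { unfold Rdiv. apply Rmult_le_pos; [apply pow_le; lra|].
      left; apply Rinv_0_lt_compat, INR_fact_lt_0. }
    nra. }
  assert (Htail : zsumR K (fun m => (1 - cone_window t m) * Cnorm2 (schr_kernel t m)) <= 200/361).
  { apply Rle_trans with (zsumR K (fun m => / r ^ 2 * (IZR m ^ 2 * Cnorm2 (schr_kernel t m)))).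
    - apply zsumR_le. intros m. unfold cone_window; fold r.
      pose proof (Cnorm2_ge_0 (schr_kernel t m)). pose proof (pow_lt r 2 Hr).
      assert (0 < / r ^ 2) by now apply Rinv_0_lt_compat.
      destruct Rle_dec as [Hle|Hle].
      { rewrite Rminus_diag, Rmult_0_l. pose proof (pow2_ge_0 (IZR m)).
        apply Rmult_le_pos; [lra | now apply Rmult_le_pos]. }
      rewrite <- (pow2_abs (IZR m)).
      assert (r ^ 2 <= Rabs (IZR m) ^ 2) by (apply pow_incr; lra).
      replace ((1 - 0) * Cnorm2 (schr_kernel t m)) with (/ r ^ 2 * (r ^ 2 * Cnorm2 (schr_kernel t m)))
        by (field; lra).
      apply Rmult_le_compat_l; nra.
    - rewrite zsumR_scal.
      apply Rle_trans with (/ r ^ 2 * (2 * t ^ 2)).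
      + apply Rmult_le_compat_l; [left; apply Rinv_0_lt_compat, pow_lt; auto|].
        apply schr_kernel_second_moment.
      + unfold r. right. field. lra. }
  assert (Hsplit : zsumR K (fun m => Cnorm2 (schr_kernel t m))
    = zsumR K (fun m => cone_kernel t m ^ 2)
      + zsumR K (fun m => (1 - cone_window t m) * Cnorm2 (schr_kernel t m))).
  { rewrite <- zsumR_plus. f_equal; apply functional_extensionality; intros m.
    unfold cone_kernel, cone_window. rewrite Cnorm2_Cmod. destruct Rle_dec; ring. }
  lra.
Qed.

Lemma cone_kernel_sum_ge t K : 0 < t -> (2 * t) ^ S K / INR (fact (S K)) <= 1/10 ->
  / 400 * sqrt t <= zsumR K (cone_kernel t).
Proof.
  intros Ht HK. pose proof (cone_kernel_sq_sum_ge t K Ht HK) as Hsq.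
  assert (Hpos : forall m, 0 <= cone_kernel t m).
  { intros m. unfold cone_kernel, cone_window. pose proof (Cmod_ge_0 (schr_kernel t m)).
    destruct Rle_dec; nra. }
  assert (Hs : 0 < sqrt t) by now apply sqrt_lt_R0.
  destruct (Rle_dec (1/4) t) as [Ht4|Ht4].
  - assert (Hdec : forall m, 0 <= cone_kernel t m <= 160 / sqrt t).
    { intros m. split; auto. unfold cone_kernel, cone_window.
      destruct Rle_dec as [Hm|]; [rewrite Rmult_1_l; now apply schr_kernel_Cmod_le_decay|].
      rewrite Rmult_0_l. unfold Rdiv. apply Rmult_le_pos; [lra|]. left; now apply Rinv_0_lt_compat. }
    pose proof (zsumR_sq_le K _ _ Hdec).
    assert (160 / sqrt t * (/ 400 * sqrt t) <= 160 / sqrt t * zsumR K (cone_kernel t)).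
    { replace (160 / sqrt t * (/ 400 * sqrt t)) with (160 / 400) by (field; lra). lra. }
    apply Rmult_le_reg_l in H0; auto. unfold Rdiv. apply Rmult_lt_0_compat; [lra|].
    now apply Rinv_0_lt_compat.
  - assert (Hbd : forall m, 0 <= cone_kernel t m <= 1).
    { intros m. split; auto. unfold cone_kernel, cone_window. pose proof (schr_kernel_Cmod_le_1 t m).
      destruct Rle_dec; lra. }
    pose proof (zsumR_sq_le K _ _ Hbd).
    assert (sqrt t <= 1) by (rewrite <- sqrt_1; apply sqrt_le_1_alt; lra). lra.
Qed.

Lemma exists_taylor_degree t : 0 <= t ->
  exists K : nat, 19/10 * t < INR K + 1 /\ (2 * t) ^ S K / INR (fact (S K)) <= 1/10.
Proof.
  intros Ht. destruct (cv_speed_pow_fact (2 * t) (1/10) ltac:(lra)) as [N HN].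
  destruct (archimed (19/10 * t)) as [Hu _].
  assert (Hup : (0 <= up (19/10 * t))%Z) by (apply le_IZR; lra).
  exists (N + Z.to_nat (up (19/10 * t)))%nat. split.
  - rewrite plus_INR.
    replace (INR (Z.to_nat (up (19/10 * t)))) with (IZR (up (19/10 * t)))
      by (rewrite INR_IZR_INZ, Z2Nat.id; auto).
    pose proof (pos_INR N). lra.
  - specialize (HN (S (N + Z.to_nat (up (19/10 * t)))) ltac:(lia)). unfold R_dist in HN.
    rewrite Rminus_0_r in HN. apply Rabs_lt_between in HN. lra.
Qed.

Theorem lemmaA :
  exists delta : R, 0 < delta /\
    forall t : R, 0 <= t ->
      exists a : Z -> C,
        (forall j : Z, Cmod (a j) <= 1) /\
        exists v : C, schr_value a t 0%Z v /\ delta * sqrt t <= Cmod v.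
Proof.
  exists (/ 400). split; [lra|]. intros t Ht.
  destruct (exists_taylor_degree t Ht) as [K [HKcone HKtaylor]].
  exists (extremal_datum t). split; [apply Cmod_extremal_datum_le_1|].
  exists (RtoC (zsumR K (cone_kernel t))). split; [now apply schr_value_extremal_datum|].
  rewrite Cmod_R.
  destruct Ht as [Hpos | <-].
  - eapply Rle_trans; [now apply (cone_kernel_sum_ge t K) | apply Rle_abs].
  - rewrite sqrt_0, Rmult_0_r. apply Rabs_pos.
Qed.
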